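(* Let $0\le \alpha<1$ and let $f=h+\overline{g}\in \mathcal{P}^{0}_{\mathcal{H}}(\alpha)$. Then for every $z\in\mathbb{D}$, $$|z|+\sum_{n=2}^{\infty}\frac{2(1-\alpha)(-1)^{n-1}}{n}|z|^{n}\;\le\; |f(z)|\;\le\; |z|+\sum_{n=2}^{\infty}\frac{2(1-\alpha)}{n}|z|^{n}.$$ Both inequalities are sharp: for $f_\alpha(z)=z+\sum_{n=2}^{\infty}\frac{2(1-\alpha)}{n}z^n$ (which belongs to $\mathcal{P}^{0}_{\mathcal{H}}(\alpha)$), equality holds in the right-hand inequality at $z=r$ and in the left-hand inequality at $z=-r$, for every $r\in[0,1)$.
   Context: $\mathbb{D}=\{z\in\mathbb{C}:|z|<1\}$. $\mathcal{H}_0$ denotes the class of harmonic functions $f=h+\overline{g}$ on $\mathbb{D}$, where $h,g$ are analytic in $\mathbb{D}$ of the form $h(z)=z+\sum_{n=2}^\infty a_nz^n$ and $g(z)=\sum_{n=2}^\infty b_nz^n$. For $0\le\alpha<1$, $\mathcal{P}^{0}_{\mathcal{H}}(\alpha)$ is the set of $f=h+\overline{g}\in\mathcal{H}_0$ such that $\operatorname{Re}(h'(z)-\alpha)>|g'(z)|$ for all $z\in\mathbb{D}$. *)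

From Stdlib Require Import Reals Lra.
From Coquelicot Require Import Coquelicot.
Open Scope R_scope.

Definition series_on_disk (a : nat -> C) (h : C -> C) : Prop :=
  forall z : C, Cmod z < 1 -> is_pseries a z (h z).

(* The class P^0_H(alpha): f = h + conj g with h(z) = z + sum_{n>=2} a_n z^n,
   g(z) = sum_{n>=2} b_n z^n analytic in D, and Re(h'(z) - alpha) > |g'(z)|
   on D (h', g' are complex derivatives). *)
Definition in_PH0 (alpha : R) (h g : C -> C) : Prop :=
  (exists a b : nat -> C,
      series_on_disk a h /\ series_on_disk b g /\
      a 0%nat = RtoC 0 /\ a 1%nat = RtoC 1 /\
      b 0%nat = RtoC 0 /\ b 1%nat = RtoC 0) /\
  (forall z : C, Cmod z < 1 ->
     exists dh dg : C,
       is_derive h z dh /\ is_derive g z dg /\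
       Re (Cminus dh (RtoC alpha)) > Cmod dg).

Definition cf (alpha : R) (n : nat) : R :=
  match n with
  | O | S O => 0
  | _ => 2 * (1 - alpha) / INR n
  end.

Definition upper_bd (alpha r : R) : R :=
  r + Series (fun n => cf alpha n * r ^ n).

Definition lower_bd (alpha r : R) : R :=
  r + Series (fun n => cf alpha n * (-1) ^ (n - 1) * r ^ n).

Definition falpha_coef (alpha : R) (n : nat) : C :=
  match n with
  | O => RtoC 0
  | S O => RtoC 1
  | _ => RtoC (cf alpha n)
  end.

From Stdlib Require Import Reals Lra Lia IndefiniteDescription.
From Coquelicot Require Import Coquelicot.
Open Scope R_scope.

(* For |eps| <= 1 the function p_eps = (h' + eps g' - alpha) / (1 - alpha)
   is given by a power series with p_eps(0) = 1 and, by the defining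
   inequality Re (h' - alpha) > |g'|, has positive real part on the disk.
   Harnack's inequality for such Caratheodory functions,
       (1 - r)/(1 + r) <= Re p(z)   and   |p(z)| <= (1 + r)/(1 - r),
   is proved from a discrete Poisson formula: averaging p over N-th roots of
   unity on the circle |zeta| = rho against the kernel (1 + x)/(1 - x)
   reproduces p(z) up to an error that vanishes as N -> oo.  Rotating eps
   suitably gives
       Re h' - |g'| >= alpha + (1 - alpha)(1 - r)/(1 + r),
       |h'| + |g'| <= alpha + (1 - alpha)(1 + r)/(1 - r),
   whose right-hand sides are the derivatives of the two comparison series
   lower_bd and upper_bd.  Integrating these along the ray from 0 to z (via
   the mean value theorem) bounds |f(z)|.  For sharpness, the extremal
   function f_alpha has f_alpha' = alpha + (1 - alpha)(1 + z)/(1 - z), so it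
   lies in the class, and its values at r and -r are the two bounds. *)

Lemma Cmod_RtoC_pos (x : R) : 0 <= x -> Cmod (RtoC x) = x.
Proof. intros. rewrite Cmod_R, Rabs_pos_eq; auto. Qed.

Lemma Cmod_1_minus (y : C) : 1 - Cmod y <= Cmod (1 - y).
Proof.
  pose proof (Cmod_triangle (1 - y) y). replace (1 - y + y)%C with (RtoC 1) in H by ring.
  rewrite Cmod_1 in H. lra.
Qed.

Lemma C_neq0_of_Cmod (y : C) : 0 < Cmod y -> y <> RtoC 0.
Proof. intros H E. rewrite E, Cmod_0 in H. lra. Qed.

Lemma Cconj_RtoC (a : R) : Cconj (RtoC a) = RtoC a.
Proof. unfold Cconj, RtoC; simpl. f_equal. ring. Qed.

Lemma Re_mult1 (z : C) : Re (z * RtoC 1) = Re z.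
Proof. rewrite Cmult_1_r. auto. Qed.

Lemma Re_le_Cmod (z : C) : Re z <= Cmod z.
Proof. pose proof (re_le_Cmod z). apply Rabs_le_between in H. lra. Qed.

Lemma Re_ge_negCmod (z : C) : - Cmod z <= Re z.
Proof. pose proof (re_le_Cmod z). apply Rabs_le_between in H. lra. Qed.

Lemma Re_div_real (z : C) (d : R) : d <> 0 -> Re (z / RtoC d)%C = Re z / d.
Proof. intros. unfold Cdiv, Cinv, Cmult, Re, RtoC; simpl. field. auto. Qed.

Lemma Cpow_swap (a : C) j m : Cpow (Cpow a j) m = Cpow (Cpow a m) j.
Proof. rewrite <- !Cpow_mult_r, Nat.mul_comm. auto. Qed.

Lemma Rdiv_pow x y n : y <> 0 -> (x / y) ^ n = x ^ n / y ^ n.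
Proof.
  intros Hy. induction n; simpl. field. rewrite IHn. field. split; auto. apply pow_nonzero; auto.
Qed.

Lemma pow_le1 x n : 0 <= x <= 1 -> x ^ n <= 1.
Proof. intros H. rewrite <- (pow1 n). apply pow_incr. auto. Qed.

Notation Cis := (@is_series C_AbsRing C_NormedModule).

Lemma is_series_eps {K : AbsRing} {V : NormedModule K} (t : nat -> V) (l : V) :
  is_series t l <-> forall eps : posreal, exists N, forall n, (N <= n)%nat ->
    norm (minus (sum_n t n) l) < eps.
Proof.
  unfold is_series. split.
  - intros H eps.
    destruct (proj1 (filterlim_locally_ball_norm (K:=K) (U:=V) (F:=eventually) (sum_n t) l) H eps)
      as [N HN].
    exists N. intros n Hn. apply HN; auto.
  - intros H. apply (proj2 (filterlim_locally_ball_norm (K:=K) (U:=V) (F:=eventually) (sum_n t) l)).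
    intros eps. destruct (H eps) as [N HN]. exists N. intros n Hn. apply HN; auto.
Qed.

Lemma Cis_eps (t : nat -> C) (l : C) :
  Cis t l <-> forall eps, 0 < eps -> exists N, forall n, (N <= n)%nat ->
    Cmod (sum_n t n - l)%C < eps.
Proof.
  rewrite is_series_eps. split.
  - intros H eps He. destruct (H (mkposreal eps He)) as [N HN]. exists N. apply HN.
  - intros H eps. destruct (H eps (cond_pos eps)) as [N HN]. exists N. apply HN.
Qed.

Lemma Ris_eps (t : nat -> R) l :
  is_series t l <-> forall eps, 0 < eps -> exists N, forall n, (N <= n)%nat ->
    Rabs (sum_n t n - l) < eps.
Proof.
  rewrite is_series_eps. split.
  - intros H eps He. destruct (H (mkposreal eps He)) as [N HN]. exists N. apply HN.
  - intros H eps. destruct (H eps (cond_pos eps)) as [N HN]. exists N. apply HN.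
Qed.

Lemma is_pseries_C (a : nat -> C) z l :
  is_pseries a z l <-> Cis (fun n => (a n * Cpow z n)%C) l.
Proof.
  assert (Hpow : forall n, pow_n z n = Cpow z n)
    by (induction n; simpl; try rewrite IHn; reflexivity).
  unfold is_pseries. split; apply is_series_ext; intros n; rewrite <- (Hpow n); apply Cmult_comm.
Qed.

Lemma Cis_unique (t : nat -> C) (l1 l2 : C) : Cis t l1 -> Cis t l2 -> l1 = l2.
Proof.
  intros H1 H2. exact (filterlim_locally_unique _ _ _ H1 H2).
Qed.

Lemma Cis_zero : Cis (fun _ => RtoC 0) (RtoC 0).
Proof.
  rewrite Cis_eps. intros eps He. exists O. intros n _.
  assert (sum_n (fun _ : nat => RtoC 0) n = RtoC 0).
  { induction n. now rewrite sum_O. rewrite sum_Sn, IHn. change (0+0 = 0)%C. ring. }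
  rewrite H. replace (0 - 0)%C with (RtoC 0) by ring. rewrite Cmod_0. lra.
Qed.

Lemma Cis_plus (a b : nat -> C) la lb : Cis a la -> Cis b lb ->
  Cis (fun n => a n + b n)%C (la + lb)%C.
Proof. intros. apply (is_series_plus a b la lb); auto. Qed.

Lemma Cis_scal (c : C) (a : nat -> C) l : Cis a l -> Cis (fun n => c * a n)%C (c * l)%C.
Proof. intros. apply (is_series_scal c a l); auto. Qed.

Lemma Cis_ext (a b : nat -> C) l : (forall n, a n = b n) -> Cis a l -> Cis b l.
Proof. intros. eapply is_series_ext; eauto. Qed.

Lemma Cis_delta0 (a : nat -> C) :
  Cis (fun m => a m * (if (m =? 0)%nat then RtoC 1 else RtoC 0))%C (a O).
Proof.
  rewrite Cis_eps. intros eps He. exists O. intros n _.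
  assert (E : sum_n (fun m => a m * (if (m =? 0)%nat then RtoC 1 else RtoC 0))%C n = a O).
  { induction n. rewrite sum_O. simpl. ring. rewrite sum_Sn, IHn. simpl.
    change (a O + a (S n) * 0 = a O)%C. ring. }
  rewrite E. replace (a O - a O)%C with (RtoC 0) by ring. rewrite Cmod_0. lra.
Qed.

Lemma Cis_shift (t : nat -> C) (l : C) : Cis (fun n => t (S n)) l -> t O = RtoC 0 -> Cis t l.
Proof.
  intros H H0. apply (is_series_decr_1 (K:=C_AbsRing) (V:=C_NormedModule)).
  rewrite H0. change (plus l (opp (RtoC 0))) with (l + - RtoC 0)%C.
  replace (l + - RtoC 0)%C with l by ring. exact H.
Qed.

Lemma sum_n_conj (t : nat -> C) n : sum_n (fun k => Cconj (t k)) n = Cconj (sum_n t n).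
Proof.
  induction n. rewrite !sum_O; auto. rewrite !sum_Sn, IHn.
  change (Cconj (sum_n t n) + Cconj (t (S n)) = Cconj (sum_n t n + t (S n)))%C.
  rewrite Cplus_conj. auto.
Qed.

Lemma Cis_conj (t : nat -> C) (l : C) : Cis t l -> Cis (fun k => Cconj (t k)) (Cconj l).
Proof.
  rewrite !Cis_eps. intros H eps He. destruct (H eps He) as [N HN]. exists N. intros n Hn.
  rewrite sum_n_conj, <- Cminus_conj, Cmod_conj. auto.
Qed.

Lemma Ris_to_Cis (v : nat -> R) V : is_series v V -> Cis (fun n => RtoC (v n)) (RtoC V).
Proof.
  assert (Hsum : forall n, sum_n (fun k => RtoC (v k)) n = RtoC (sum_n v n)).
  { induction n. rewrite !sum_O; auto. rewrite !sum_Sn, IHn.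
    change (RtoC (sum_n v n) + RtoC (v (S n)) = RtoC (sum_n v n + v (S n)))%C.
    rewrite RtoC_plus. auto. }
  rewrite Ris_eps, Cis_eps. intros H eps He. destruct (H eps He) as [N HN]. exists N. intros n Hn.
  rewrite Hsum, <- RtoC_minus, Cmod_R. apply HN; auto.
Qed.

Lemma sum_n_Cmod (t : nat -> C) n : Cmod (sum_n t n) <= sum_n (fun k => Cmod (t k)) n.
Proof.
  induction n.
  - rewrite !sum_O. lra.
  - rewrite !sum_Sn. eapply Rle_trans. apply Cmod_triangle. simpl. unfold plus; simpl. lra.
Qed.

Lemma Cis_norm_le (t : nat -> C) (l : C) B :
  Cis t l -> (forall n, sum_n (fun k => Cmod (t k)) n <= B) -> Cmod l <= B.
Proof.
  intros H HB. destruct (Rle_lt_dec (Cmod l) B) as [|Hlt]; auto. exfalso.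
  rewrite Cis_eps in H. destruct (H (Cmod l - B)) as [N HN]; [lra|].
  specialize (HN N (le_n _)). pose proof (sum_n_Cmod t N). specialize (HB N).
  assert (Cmod l <= Cmod (sum_n t N) + Cmod (sum_n t N - l)).
  { replace l with (sum_n t N + (-(sum_n t N - l)))%C at 1 by ring.
    eapply Rle_trans. apply Cmod_triangle. rewrite Cmod_opp. lra. }
  lra.
Qed.

Lemma Cis_bounded (t : nat -> C) (l : C) : Cis t l -> exists M, forall n, Cmod (t n) <= M.
Proof.
  intros H. destruct (filterlim_bounded (K:=C_AbsRing) (V:=C_NormedModule) (sum_n t)) as [M HM].
  { exists l. exact H. }
  assert (HM' : forall n, Cmod (sum_n t n) <= M) by (intros n; exact (HM n)).
  exists (2 * M). intros n. pose proof (HM' n) as H0.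
  assert (0 <= M) by (eapply Rle_trans; [apply Cmod_ge_0|apply H0]).
  destruct n.
  - rewrite sum_O in H0. lra.
  - pose proof (HM' n) as Hn. rewrite sum_Sn in H0.
    assert (Heq : t (S n) = (plus (sum_n t n) (t (S n)) - sum_n t n)%C).
    { change (plus (sum_n t n) (t (S n))) with (sum_n t n + t (S n))%C. ring. }
    rewrite Heq. eapply Rle_trans. apply Cmod_triangle. rewrite Cmod_opp. lra.
Qed.

Lemma Ris_partial_le (b : nat -> R) B : is_series b B -> (forall n, 0 <= b n) ->
  forall n, sum_n b n <= B.
Proof.
  intros H Hb n0. destruct (Rle_lt_dec (sum_n b n0) B) as [|Hlt]; auto. exfalso.
  rewrite Ris_eps in H. destruct (H (sum_n b n0 - B)) as [N HN]; [lra|].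
  assert (Hmono : forall k, sum_n b n0 <= sum_n b (n0 + k)).
  { induction k. rewrite Nat.add_0_r. lra. rewrite Nat.add_succ_r, sum_Sn.
    pose proof (Hb (S (n0 + k))). unfold plus; simpl. lra. }
  specialize (HN (N + n0)%nat ltac:(lia)). specialize (Hmono N).
  rewrite Nat.add_comm in Hmono. apply Rabs_lt_between in HN. lra.
Qed.

Lemma Cgeom (z : C) : Cmod z < 1 -> Cis (fun n => Cpow z n) (/ (1 - z))%C.
Proof.
  intros Hz. pose proof (Cmod_ge_0 z).
  assert (Hnz : (1 - z)%C <> RtoC 0).
  { intros E. assert (z = RtoC 1) by (replace z with (1 - (1 - z))%C by ring; rewrite E; ring).
    subst. rewrite Cmod_1 in Hz. lra. }
  assert (HS : forall n, (sum_n (fun k => Cpow z k) n * (1 - z))%C = (1 - Cpow z (S n))%C).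
  { induction n. rewrite sum_O. simpl. ring. rewrite sum_Sn.
    change ((sum_n (fun k => Cpow z k) n + Cpow z (S n)) * (1 - z) = 1 - Cpow z (S (S n)))%C.
    rewrite Cmult_plus_distr_r, IHn. simpl. ring. }
  rewrite Cis_eps. intros eps He.
  assert (Hg : Rabs (Cmod z) < 1) by (rewrite Rabs_pos_eq; auto).
  pose proof (is_lim_seq_geom _ Hg) as Hl. apply is_lim_seq_spec in Hl.
  assert (Hd : 0 < 1 - Cmod z) by lra.
  destruct (Hl (mkposreal (eps * (1 - Cmod z)) ltac:(apply Rmult_lt_0_compat; lra))) as [N HN].
  exists N. intros n Hn. specialize (HN (S n) ltac:(lia)). simpl pos in HN.
  rewrite Rminus_0_r in HN.
  rewrite Rabs_pos_eq in HN by (apply pow_le; lra).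
  assert (E : (sum_n (fun k => Cpow z k) n - / (1 - z))%C = (- Cpow z (S n) / (1 - z))%C).
  { transitivity (sum_n (fun k => Cpow z k) n * (1 - z) / (1 - z) - / (1 - z))%C.
    field. auto. rewrite HS. field. auto. }
  rewrite E. unfold Cdiv. rewrite Cmod_mult, Cmod_opp, Cmod_inv, Cmod_pow by auto.
  assert (1 - Cmod z <= Cmod (1 - z)).
  { pose proof (Cmod_triangle (1 - z) z). replace (1 - z + z)%C with (RtoC 1) in H0 by ring.
    rewrite Cmod_1 in H0. lra. }
  apply Rle_lt_trans with (Cmod z ^ S n * / (1 - Cmod z)).
  apply Rmult_le_compat_l. apply pow_le; lra. apply Rinv_le_contravar; lra.
  apply Rmult_lt_reg_r with (1 - Cmod z); auto. rewrite Rmult_assoc, Rinv_l; lra.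
Qed.

Lemma CV_radius_ge_1 (a : nat -> R) :
  (forall r, 0 <= r < 1 -> exists M, forall n, Rabs (a n * r ^ n) <= M) ->
  forall x, Rabs x < 1 -> Rbar_lt (Rabs x) (CV_radius a).
Proof.
  intros H x Hx. pose proof (Rabs_pos x).
  set (r := (Rabs x + 1) / 2).
  destruct (CV_radius_bounded a) as [Hub _].
  assert (Rbar_le r (CV_radius a)). { apply Hub. apply H. unfold r; lra. }
  destruct (CV_radius a) as [c| |]; simpl in *; auto; unfold r in *; lra.
Qed.

(* sum (n+1)(n+2) q^n converges: the second derivative of the geometric series. *)
Lemma ex_series_poly (q : R) : 0 <= q < 1 ->
  ex_series (fun n => INR (S n) * INR (S (S n)) * q ^ n).
Proof.
  intros Hq. set (one := fun _ : nat => 1).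
  assert (Hcv : Rbar_lt (Rabs q) (CV_radius one)).
  { apply CV_radius_ge_1. intros r Hr. exists 1. intros n. unfold one.
    rewrite Rmult_1_l, Rabs_pos_eq by (apply pow_le; lra). rewrite <- (pow1 n).
    apply pow_incr; lra. rewrite Rabs_pos_eq; lra. }
  rewrite <- CV_radius_derive in Hcv.
  apply ex_pseries_derive in Hcv.
  destruct Hcv as [l Hl]. exists l. unfold is_pseries in Hl.
  eapply is_series_ext; [|apply Hl]. intros n. unfold PS_derive, one.
  change (pow_n q n * (INR (S n) * (INR (S (S n)) * 1)) = INR (S n) * INR (S (S n)) * q ^ n).
  rewrite pow_n_pow. ring.
Qed.

Lemma ex_series_below_poly (c : nat -> R) (q : R) : 0 <= q < 1 ->
  (forall n, 0 <= c n <= INR (S n) * INR (S (S n))) -> ex_series (fun n => c n * q ^ n).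
Proof.
  intros Hq Hc.
  eapply (ex_series_le (K:=R_AbsRing) (V:=R_CompleteNormedModule)); [|apply (ex_series_poly q Hq)].
  intros n. change (norm ?x) with (Rabs x). specialize (Hc n).
  rewrite Rabs_pos_eq by (apply Rmult_le_pos; [lra | apply pow_le; lra]).
  apply Rmult_le_compat_r; [apply pow_le; lra | lra].
Qed.

Lemma ex_series_n2 (q : R) : 0 <= q < 1 -> ex_series (fun n => INR n ^ 2 * q ^ n).
Proof.
  intros Hq. apply ex_series_below_poly; auto. intros n.
  rewrite !S_INR. pose proof (pos_INR n). split; nra.
Qed.

Lemma ex_series_n1 (q : R) : 0 <= q < 1 -> ex_series (fun n => INR (S n) * q ^ n).
Proof.
  intros Hq. apply ex_series_below_poly; auto. intros n.
  rewrite !S_INR. pose proof (pos_INR n). split; nra.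
Qed.

Lemma lim_nqn (q : R) : 0 <= q < 1 -> is_lim_seq (fun n => INR n * q ^ n) 0.
Proof.
  intros Hq. apply ex_series_lim_0. apply ex_series_below_poly; auto. intros n.
  rewrite !S_INR. pose proof (pos_INR n). split; nra.
Qed.

Lemma ps_coef_bound (a : nat -> C) h : series_on_disk a h -> forall R', 0 <= R' < 1 ->
  exists M, 0 <= M /\ forall n, Cmod (a n) * R' ^ n <= M.
Proof.
  intros Hs R' HR. assert (Cmod (RtoC R') < 1) by (rewrite Cmod_RtoC_pos; lra).
  specialize (Hs _ H). apply is_pseries_C in Hs. apply Cis_bounded in Hs as [M HM].
  exists M. split. eapply Rle_trans; [apply Cmod_ge_0|apply (HM O)].
  intros n. specialize (HM n). rewrite Cmod_mult, Cmod_pow, Cmod_RtoC_pos in HM; lra.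
Qed.

Definition pow_remainder (w z : C) (n : nat) : C :=
  (Cpow w n - Cpow z n - INR n * Cpow z (n - 1) * (w - z))%C.

Lemma pow_remainder_S (w z : C) n :
  pow_remainder w z (S n) =
  (w * pow_remainder w z n + INR n * Cpow z (n - 1) * (w - z) * (w - z))%C.
Proof.
  unfold pow_remainder. destruct n.
  - simpl. ring.
  - replace (S (S n) - 1)%nat with (S n) by lia. replace (S n - 1)%nat with n by lia.
    rewrite !S_INR. simpl. rewrite RtoC_plus. ring.
Qed.

Lemma pow_remainder_bound (w z : C) R : 0 < R -> Cmod w <= R -> Cmod z <= R ->
  forall n, R ^ 2 * Cmod (pow_remainder w z n) <= INR n ^ 2 * R ^ n * Cmod (w - z) ^ 2.
Proof.
  intros HR Hw Hz n. set (d := Cmod (w - z)). assert (Hd : 0 <= d) by apply Cmod_ge_0.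
  induction n.
  - unfold pow_remainder. simpl. replace (1 - 1 - 0 * 1 * (w - z))%C with (RtoC 0) by ring.
    rewrite Cmod_0. lra.
  - rewrite pow_remainder_S.
    assert (Hstep : Cmod (w * pow_remainder w z n + INR n * Cpow z (n - 1) * (w - z) * (w - z)) <=
            R * Cmod (pow_remainder w z n) + INR n * R ^ (n - 1) * d ^ 2).
    { eapply Rle_trans. apply Cmod_triangle. rewrite !Cmod_mult, Cmod_pow.
      rewrite Cmod_RtoC_pos by apply pos_INR. fold d.
      apply Rplus_le_compat. apply Rmult_le_compat_r. apply Cmod_ge_0. auto.
      replace (d ^ 2) with (d * d) by ring. rewrite <- !Rmult_assoc.
      apply Rmult_le_compat_r; auto. apply Rmult_le_compat_r; auto.
      apply Rmult_le_compat_l. apply pos_INR. apply pow_incr. split; auto. apply Cmod_ge_0. }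
    assert (HRn' : R ^ 2 * (INR n * R ^ (n - 1)) <= INR n * R ^ S n).
    { destruct n. simpl. lra. replace (S n - 1)%nat with n by lia. simpl. lra. }
    rewrite S_INR.
    apply Rle_trans with (R ^ 2 * (R * Cmod (pow_remainder w z n) + INR n * R ^ (n - 1) * d ^ 2)).
    { apply Rmult_le_compat_l. apply pow_le; lra. auto. }
    replace (R ^ 2 * (R * Cmod (pow_remainder w z n) + INR n * R ^ (n - 1) * d ^ 2)) with
      (R * (R ^ 2 * Cmod (pow_remainder w z n)) + (R ^ 2 * (INR n * R ^ (n - 1))) * d ^ 2) by ring.
    apply Rle_trans with (R * (INR n ^ 2 * R ^ n * d ^ 2) + (INR n * R ^ S n) * d ^ 2).
    { apply Rplus_le_compat. apply Rmult_le_compat_l; lra.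
      apply Rmult_le_compat_r. apply pow_le; auto. auto. }
    replace (R * (INR n ^ 2 * R ^ n * d ^ 2) + INR n * R ^ S n * d ^ 2)
      with ((INR n ^ 2 + INR n) * (R ^ S n * d ^ 2)) by (simpl; ring).
    replace ((INR n + 1) ^ 2 * R ^ S n * d ^ 2) with ((INR n + 1) ^ 2 * (R ^ S n * d ^ 2)) by ring.
    apply Rmult_le_compat_r. apply Rmult_le_pos; apply pow_le; lra. pose proof (pos_INR n). nra.
Qed.

Lemma is_derive_of_quadratic_remainder (f : C -> C) (z l : C) (K del : R) :
  0 < del -> 0 <= K ->
  (forall w, Cmod (w - z) < del -> Cmod (f w - f z - (w - z) * l)%C <= K * Cmod (w - z) ^ 2) ->
  is_derive f z l.
Proof.
  intros Hdel0 HK Key. unfold is_derive, filterdiff. split. apply is_linear_scal_l.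
  intros x Hx.
  apply (is_filter_lim_locally_unique (K:=C_AbsRing) (V:=AbsRing_NormedModule C_AbsRing)) in Hx.
  subst x. intros eps. set (del' := Rmin del (eps / (K + 1))).
  assert (Hdel : 0 < del').
  { unfold del'. apply Rmin_pos. lra. apply Rdiv_lt_0_compat. apply cond_pos. lra. }
  assert (Hs2 : 0 < sqrt 2) by (apply sqrt_lt_R0; lra).
  exists (mkposreal (del' / sqrt 2) (Rdiv_lt_0_compat _ _ Hdel Hs2)). intros y Hy.
  change (Cmod (y - z)%C < del' / sqrt 2) in Hy.
  assert (Hy' : Cmod (y - z)%C < del').
  { eapply Rlt_le_trans. exact Hy. apply Rmult_le_reg_r with (sqrt 2); auto.
    replace (del' / sqrt 2 * sqrt 2) with del' by (field; lra).
    assert (1 <= sqrt 2). { rewrite <- sqrt_1. apply sqrt_le_1_alt. lra. } nra. }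
  change (Cmod (f y - f z - (y - z) * l)%C <= eps * Cmod (y - z)%C).
  assert (Hyz1 : Cmod (y - z) < del) by (eapply Rlt_le_trans; [exact Hy'| apply Rmin_l]).
  assert (Hyz2 : Cmod (y - z) <= eps / (K + 1))
    by (left; eapply Rlt_le_trans; [exact Hy'| apply Rmin_r]).
  eapply Rle_trans. apply (Key y Hyz1).
  pose proof (Cmod_ge_0 (y - z)). pose proof (cond_pos eps).
  assert (K * Cmod (y - z) <= eps).
  { apply Rle_trans with (K * (eps / (K + 1))). apply Rmult_le_compat_l; auto.
    apply Rmult_le_reg_r with (K + 1). lra.
    replace (K * (eps / (K + 1)) * (K + 1)) with (K * eps) by (field; lra). nra. }
  simpl. nra.
Qed.

Lemma ps_remainder_series (a : nat -> C) (h : C -> C) : series_on_disk a h ->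
  forall z w l, Cmod z < 1 -> Cmod w < 1 ->
  Cis (fun n => INR (S n) * a (S n) * Cpow z n)%C l ->
  Cis (fun n => a n * pow_remainder w z n)%C (h w - h z - (w - z) * l)%C.
Proof.
  intros Hs z w l Hz Hw Hl.
  assert (Hhw : Cis (fun n => a n * Cpow w n)%C (h w)) by (apply is_pseries_C, Hs; lra).
  assert (Hhz : Cis (fun n => a n * Cpow z n)%C (h z)) by (apply is_pseries_C, Hs; lra).
  assert (Hl' : Cis (fun n => INR n * a n * Cpow z (n - 1))%C l).
  { apply Cis_shift. eapply Cis_ext; [|exact Hl]. intros n. simpl. rewrite Nat.sub_0_r. reflexivity.
    simpl. ring. }
  pose proof (Cis_plus _ _ _ _ (Cis_plus _ _ _ _ Hhw (Cis_scal (-1) _ _ Hhz))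
                (Cis_scal (- (w - z)) _ _ Hl')) as Hc.
  replace (h w - h z - (w - z) * l)%C with (h w + -1 * h z + - (w - z) * l)%C by ring.
  eapply Cis_ext; [|exact Hc]. intros n. unfold pow_remainder. simpl. ring.
Qed.

Section TermwiseDerivative.
Variables (a : nat -> C) (h : C -> C).
Hypothesis Hs : series_on_disk a h.
Variables (z : C) (R R' M : R).
Hypothesis HzR : Cmod z < R.
Hypothesis HRR' : R < R'.
Hypothesis HR'1 : R' < 1.
Hypothesis HM0 : 0 <= M.
Hypothesis HM : forall n, Cmod (a n) * R' ^ n <= M.

Let q := R / R'.

Lemma tw_R_pos : 0 < R.
Proof. pose proof (Cmod_ge_0 z). lra. Qed.

Lemma tw_q_range : 0 <= q < 1.
Proof.
  pose proof tw_R_pos. unfold q. split. apply Rdiv_le_0_compat; lra.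
  apply Rmult_lt_reg_r with R'. lra. unfold Rdiv. rewrite Rmult_assoc, Rinv_l; lra.
Qed.

Lemma tw_coef_bound n : Cmod (a n) * R ^ n <= M * q ^ n.
Proof.
  pose proof tw_R_pos. assert (HR' : 0 < R' ^ n) by (apply pow_lt; lra).
  unfold q. rewrite Rdiv_pow by lra.
  apply Rmult_le_reg_r with (R' ^ n); auto.
  replace (M * (R ^ n / R' ^ n) * R' ^ n) with (M * R ^ n) by (field; lra).
  replace (Cmod (a n) * R ^ n * R' ^ n) with (Cmod (a n) * R' ^ n * R ^ n) by ring.
  apply Rmult_le_compat_r. apply pow_le; lra. apply HM.
Qed.

Lemma tw_deriv_series_ex :
  exists l, Cis (fun n => INR (S n) * a (S n) * Cpow z n)%C l.
Proof.
  pose proof tw_R_pos. pose proof tw_q_range.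
  assert (Hex : ex_series (K:=C_AbsRing) (V:=C_CompleteNormedModule)
                 (fun n => INR (S n) * a (S n) * Cpow z n)%C).
  { apply (ex_series_le (K:=C_AbsRing) (V:=C_CompleteNormedModule)) with
      (b := fun n => M / R * (INR (S n) * q ^ S n)).
    - intros n. change (Cmod (INR (S n) * a (S n) * Cpow z n)%C <= M / R * (INR (S n) * q ^ S n)).
      rewrite !Cmod_mult, Cmod_pow, Cmod_RtoC_pos by apply pos_INR.
      pose proof (pos_INR (S n)). pose proof (tw_coef_bound (S n)).
      pose proof (pow_incr (Cmod z) R n (conj (Cmod_ge_0 z) (Rlt_le _ _ HzR))).
      pose proof (pow_lt R n H). pose proof (Cmod_ge_0 (a (S n))).
      apply Rle_trans with (INR (S n) * (Cmod (a (S n)) * R ^ n)).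
      { rewrite Rmult_assoc. apply Rmult_le_compat_l; auto. apply Rmult_le_compat_l; auto. }
      replace (M / R * (INR (S n) * q ^ S n)) with (INR (S n) * (M * q ^ S n / R)) by (field; lra).
      apply Rmult_le_compat_l; auto. apply Rmult_le_reg_r with R; auto.
      replace (M * q ^ S n / R * R) with (M * q ^ S n) by (field; lra).
      replace (Cmod (a (S n)) * R ^ n * R) with (Cmod (a (S n)) * R ^ S n) by (simpl; ring). auto.
    - apply (ex_series_scal_l (K:=R_AbsRing) (V:=R_NormedModule)).
      destruct (ex_series_n1 q H0) as [l Hl]. exists (q * l).
      eapply is_series_ext; [|apply (is_series_scal_l (K:=R_AbsRing) (V:=R_NormedModule) q _ _ Hl)].
      intros n. change (q * (INR (S n) * q ^ n) = INR (S n) * q ^ S n). simpl. ring. }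
  destruct Hex as [l Hl]. exists l. exact Hl.
Qed.

Lemma tw_remainder_term_bound w k : Cmod w <= R ->
  Cmod (a k * pow_remainder w z k)%C <= M / R ^ 2 * Cmod (w - z) ^ 2 * (INR k ^ 2 * q ^ k).
Proof.
  intros Hw. pose proof tw_R_pos as HRpos. pose proof tw_q_range as Hq.
  set (d := Cmod (w - z)). pose proof (Cmod_ge_0 (w - z)) as Hd. fold d in Hd.
  rewrite Cmod_mult.
  pose proof (pow_remainder_bound w z R HRpos Hw (Rlt_le _ _ HzR) k) as HE. fold d in HE.
  pose proof (pow_lt R k HRpos). pose proof (tw_coef_bound k). pose proof (Cmod_ge_0 (a k)).
  assert (HE' : Cmod (pow_remainder w z k) <= INR k ^ 2 * R ^ k * d ^ 2 / R ^ 2).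
  { apply Rmult_le_reg_l with (R ^ 2). apply pow_lt; lra.
    replace (R ^ 2 * (INR k ^ 2 * R ^ k * d ^ 2 / R ^ 2)) with (INR k ^ 2 * R ^ k * d ^ 2)
      by (field; lra). auto. }
  apply Rle_trans with (Cmod (a k) * (INR k ^ 2 * R ^ k * d ^ 2 / R ^ 2)).
  { apply Rmult_le_compat_l; auto. }
  replace (Cmod (a k) * (INR k ^ 2 * R ^ k * d ^ 2 / R ^ 2))
    with ((Cmod (a k) * R ^ k) * (INR k ^ 2 * d ^ 2 / R ^ 2)) by (field; lra).
  replace (M / R ^ 2 * d ^ 2 * (INR k ^ 2 * q ^ k))
    with ((M * q ^ k) * (INR k ^ 2 * d ^ 2 / R ^ 2)) by (field; lra).
  apply Rmult_le_compat_r; auto.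
  apply Rdiv_le_0_compat. apply Rmult_le_pos; apply pow_le; [apply pos_INR | auto].
  apply pow_lt; lra.
Qed.

(* The first-order remainder of h at z is quadratically small, the
   constant coming from the convergent series sum n^2 q^n. *)
Lemma tw_quadratic_remainder (l : C) :
  Cis (fun n => INR (S n) * a (S n) * Cpow z n)%C l ->
  exists K, 0 <= K /\ forall w, Cmod (w - z) < R - Cmod z ->
    Cmod (h w - h z - (w - z) * l)%C <= K * Cmod (w - z) ^ 2.
Proof.
  intros Hl. pose proof tw_R_pos as HRpos. pose proof tw_q_range as Hq.
  destruct (ex_series_n2 q Hq) as [S2 HS2].
  assert (HS2pos : 0 <= S2).
  { eapply Rle_trans; [|apply (Ris_partial_le _ _ HS2) with (n := O)].
    rewrite sum_O. simpl. lra. intros. apply Rmult_le_pos. apply pow_le, pos_INR.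
    apply pow_le; lra. }
  exists (M / R ^ 2 * S2). split.
  { apply Rmult_le_pos; auto. apply Rdiv_le_0_compat; auto. apply pow_lt; lra. }
  intros w Hwz. set (d := Cmod (w - z)). pose proof (Cmod_ge_0 (w - z)) as Hd. fold d in Hd, Hwz.
  assert (Hw : Cmod w <= R).
  { replace w with (z + (w - z))%C by ring. eapply Rle_trans. apply Cmod_triangle. fold d. lra. }
  assert (Hrem := ps_remainder_series a h Hs z w l ltac:(lra) ltac:(lra) Hl).
  apply (Cis_norm_le _ _ _ Hrem). intros n.
  apply Rle_trans with (sum_n (fun k => M / R ^ 2 * d ^ 2 * (INR k ^ 2 * q ^ k)) n).
  - apply sum_n_m_le. intros k. apply tw_remainder_term_bound; auto.
  - apply Ris_partial_le.
    + replace (M / R ^ 2 * S2 * d ^ 2) with (M / R ^ 2 * d ^ 2 * S2) by ring.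
      apply (is_series_scal_l (K:=R_AbsRing) (V:=R_NormedModule)). auto.
    + intros k. apply Rmult_le_pos. apply Rmult_le_pos. apply Rdiv_le_0_compat; auto.
      apply pow_lt; lra. apply pow_le; auto.
      apply Rmult_le_pos. apply pow_le, pos_INR. apply pow_le; lra.
Qed.

End TermwiseDerivative.

Lemma ps_deriv (a : nat -> C) h : series_on_disk a h -> forall z, Cmod z < 1 ->
  exists l : C, Cis (fun n => INR (S n) * a (S n) * Cpow z n)%C l /\ is_derive h z l.
Proof.
  intros Hs z Hz. pose proof (Cmod_ge_0 z).
  set (R := (Cmod z + 1) / 2). set (R' := (R + 1) / 2).
  destruct (ps_coef_bound a h Hs R') as [M [HM0 HM]]. unfold R', R; lra.
  assert (HzR : Cmod z < R) by (unfold R; lra).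
  assert (HRR' : R < R') by (unfold R', R; lra).
  assert (HR'1 : R' < 1) by (unfold R', R; lra).
  destruct (tw_deriv_series_ex a z R R' M HzR HRR' HM) as [l Hl].
  destruct (tw_quadratic_remainder a h Hs z R R' M HzR HRR' HR'1 HM0 HM l Hl) as [K [HK Hrem]].
  exists l. split. exact Hl.
  apply (is_derive_of_quadratic_remainder h z l K (R - Cmod z)); auto. lra.
Qed.
Fixpoint csum (f : nat -> C) (n : nat) : C :=
  match n with O => RtoC 0 | S n => (csum f n + f n)%C end.
Fixpoint rsum (f : nat -> R) (n : nat) : R :=
  match n with O => 0 | S n => rsum f n + f n end.

Lemma Cis_csum (F : nat -> nat -> C) (L : nat -> C) N :
  (forall j, (j < N)%nat -> Cis (F j) (L j)) ->
  Cis (fun m => csum (fun j => F j m) N) (csum L N).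
Proof.
  induction N; intros H; simpl.
  - apply Cis_zero.
  - apply Cis_plus. apply IHN. intros; apply H; lia. apply H; lia.
Qed.

Lemma csum_Cmod (f : nat -> C) n : Cmod (csum f n) <= rsum (fun j => Cmod (f j)) n.
Proof.
  induction n; simpl. rewrite Cmod_0; lra.
  eapply Rle_trans. apply Cmod_triangle. lra.
Qed.

Lemma csum_ext (f g : nat -> C) n : (forall j, (j < n)%nat -> f j = g j) -> csum f n = csum g n.
Proof. induction n; simpl; intros; auto. rewrite IHn, H; auto. Qed.

Lemma rsum_ext (f g : nat -> R) n : (forall j, (j < n)%nat -> f j = g j) -> rsum f n = rsum g n.
Proof. induction n; simpl; intros; auto. rewrite IHn, H; auto. Qed.

Lemma rsum_le (f g : nat -> R) n : (forall j, (j < n)%nat -> f j <= g j) -> rsum f n <= rsum g n.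
Proof. induction n; simpl; intros; try lra. pose proof (H n (le_n _)).
  pose proof (IHn ltac:(intros; apply H; lia)). lra. Qed.

Lemma csum_plus (f g : nat -> C) n : csum (fun j => f j + g j)%C n = (csum f n + csum g n)%C.
Proof. induction n; simpl. ring. rewrite IHn. ring. Qed.

Lemma csum_scal (c : C) (f : nat -> C) n : csum (fun j => c * f j)%C n = (c * csum f n)%C.
Proof. induction n; simpl. ring. rewrite IHn. ring. Qed.

Lemma rsum_scal (a : R) (f : nat -> R) n : rsum (fun j => a * f j) n = a * rsum f n.
Proof. induction n; simpl. ring. rewrite IHn. ring. Qed.

Lemma csum_conj (f : nat -> C) N : Cconj (csum f N) = csum (fun j => Cconj (f j)) N.
Proof.
  induction N; simpl. unfold Cconj, RtoC; simpl. rewrite Ropp_0. reflexivity.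
  rewrite Cplus_conj, IHN. auto.
Qed.

Lemma csum_const (c : C) N : csum (fun _ => c) N = (INR N * c)%C.
Proof. induction N; simpl csum. simpl. ring. rewrite IHN, S_INR, RtoC_plus. ring. Qed.

Lemma Re_csum (f : nat -> C) N : Re (csum f N) = rsum (fun j => Re (f j)) N.
Proof. induction N; simpl; auto. rewrite <- IHN. auto. Qed.

Lemma csum_swap (F : nat -> nat -> C) n m :
  csum (fun j => csum (fun k => F j k) m) n = csum (fun k => csum (fun j => F j k) n) m.
Proof.
  induction n; simpl.
  - induction m; simpl; auto. rewrite <- IHm. ring.
  - rewrite IHn. rewrite <- csum_plus. reflexivity.
Qed.

Lemma rsum_const c n : rsum (fun _ => c) n = INR n * c.
Proof. induction n; simpl rsum. simpl; ring. rewrite IHn, S_INR. ring. Qed.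

Lemma csum_zero (f : nat -> C) N : (forall k, (k < N)%nat -> f k = RtoC 0) -> csum f N = RtoC 0.
Proof. induction N; simpl; intros; auto. rewrite IHN. rewrite H by lia. ring.
  intros; apply H; lia. Qed.

Lemma csum_single (f : nat -> C) (P : nat -> bool) (c : C) N k0 :
  (k0 < N)%nat -> (forall k, (k < N)%nat -> (P k = true <-> k = k0)) ->
  csum (fun k => f k * if P k then c else RtoC 0)%C N = (f k0 * c)%C.
Proof.
  induction N; intros Hk0 HP. lia. simpl.
  destruct (Nat.eq_dec k0 N) as [E|E].
  - subst k0. rewrite csum_zero. 
    + destruct (HP N ltac:(lia)) as [_ H2]. rewrite H2; auto. ring.
    + intros k Hk. destruct (P k) eqn:Pk; [|ring]. apply HP in Pk; lia.
  - rewrite IHN by (try lia; intros; apply HP; lia).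
    destruct (P N) eqn:PN; [apply HP in PN; lia|]. ring.
Qed.

Lemma cis_mult a b : ((cos a, sin a) * (cos b, sin b))%C = (cos (a + b), sin (a + b)).
Proof. unfold Cmult; simpl. rewrite cos_plus, sin_plus. f_equal; ring. Qed.

Lemma cis_pow t n : Cpow (cos t, sin t) n = (cos (INR n * t), sin (INR n * t)).
Proof.
  induction n.
  - simpl. rewrite Rmult_0_l, cos_0, sin_0. reflexivity.
  - rewrite Cpow_S, IHn, cis_mult. rewrite S_INR. f_equal; f_equal; ring.
Qed.

Definition unit_root (N : nat) : C := (cos (2 * PI / INR N), sin (2 * PI / INR N)).

Lemma unit_root_pow N n : Cpow (unit_root N) n
  = (cos (2 * PI * INR n / INR N), sin (2 * PI * INR n / INR N)).
Proof. unfold unit_root. rewrite cis_pow. f_equal; f_equal; unfold Rdiv; ring. Qed.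

Lemma unit_root_N N : (0 < N)%nat -> Cpow (unit_root N) N = RtoC 1.
Proof.
  intros HN. rewrite unit_root_pow. assert (0 < INR N) by (apply lt_0_INR; auto).
  replace (2 * PI * INR N / INR N) with (2 * PI) by (field; lra).
  rewrite cos_2PI, sin_2PI. reflexivity.
Qed.

Lemma Cmod_cis t : Cmod (cos t, sin t) = 1.
Proof.
  unfold Cmod; simpl. pose proof (sin2_cos2 t). unfold Rsqr in H.
  replace (cos t * (cos t * 1) + sin t * (sin t * 1)) with 1 by lra. apply sqrt_1.
Qed.

Lemma Cmod_unit_root N : Cmod (unit_root N) = 1.
Proof. apply Cmod_cis. Qed.

Lemma unit_root_conj N : (unit_root N * Cconj (unit_root N))%C = RtoC 1.
Proof.
  rewrite <- Cmod2_conj, Cmod_unit_root. simpl. f_equal; ring.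
Qed.

Lemma unit_root_mod N e : (0 < N)%nat -> Cpow (unit_root N) e = Cpow (unit_root N) (e mod N).
Proof.
  intros HN. rewrite (Nat.div_mod e N) at 1 by lia.
  rewrite Cpow_add_r, Cpow_mult_r, unit_root_N, Cpow_1_l by auto. ring.
Qed.

(* A power omega^e with 0 < e < N is not 1, since cos(2 pi e/N) < 1. *)
Lemma unit_root_ne1 N e : (0 < e < N)%nat -> Cpow (unit_root N) e <> RtoC 1.
Proof.
  intros He Heq. rewrite unit_root_pow in Heq. injection Heq as Hc Hs.
  set (x := 2 * PI * INR e / INR N) in *.
  assert (Hx : 0 < x / 2 < PI).
  { assert (0 < INR e) by (apply lt_0_INR; lia). assert (INR e < INR N) by (apply lt_INR; lia).
    pose proof PI_RGT_0. unfold x. split.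
    - apply Rdiv_lt_0_compat; [|lra]. apply Rdiv_lt_0_compat; nra.
    - apply Rmult_lt_reg_r with (2 * INR N). nra. field_simplify; try lra. nra. }
  pose proof (sin_gt_0 _ (proj1 Hx) (proj2 Hx)).
  replace x with (2 * (x / 2)) in Hc by field. rewrite cos_2a_sin in Hc. nra.
Qed.

Lemma csum_geom (y : C) N : (csum (fun j => Cpow y j) N * (1 - y))%C = (1 - Cpow y N)%C.
Proof. induction N; simpl. ring. rewrite Cmult_plus_distr_r, IHN. ring. Qed.

Lemma csum_geom_root (y : C) N : y <> RtoC 1 -> Cpow y N = RtoC 1 -> csum (fun j => Cpow y j) N
  = RtoC 0.
Proof.
  intros H1 H2. pose proof (csum_geom y N). rewrite H2 in H.
  replace (1 - 1)%C with (RtoC 0) in H by ring.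
  assert (Hnz : (1 - y)%C <> RtoC 0).
  { intros E. apply H1. replace y with (1 - (1 - y))%C by ring. rewrite E. ring. }
  transitivity (csum (fun j => Cpow y j) N * (1 - y) / (1 - y))%C. field; auto.
  rewrite H. field. auto.
Qed.

Lemma root_sum N e : (0 < N)%nat ->
  csum (fun j => Cpow (Cpow (unit_root N) e) j) N
    = if (e mod N =? 0)%nat then RtoC (INR N) else RtoC 0.
Proof.
  intros HN. destruct (Nat.eqb_spec (e mod N) 0) as [E|E].
  - rewrite unit_root_mod, E by auto. simpl Cpow. rewrite (csum_ext _ (fun _ => RtoC 1)).
    rewrite csum_const. apply Cmult_1_r. intros. apply Cpow_1_l.
  - apply csum_geom_root.
    + rewrite unit_root_mod by auto. apply unit_root_ne1. pose proof (Nat.mod_upper_bound e N). lia.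
    + rewrite <- Cpow_mult_r, Nat.mul_comm, Cpow_mult_r, unit_root_N, Cpow_1_l; auto.
Qed.

Lemma mod_small_eq0 e N : (0 < N)%nat -> (e < N)%nat -> (e mod N =? 0)%nat = (e =? 0)%nat.
Proof. intros. rewrite Nat.mod_small; auto. Qed.

Lemma root_sum_mixed N m k : (m < N)%nat -> (k < N)%nat ->
  csum (fun j => Cpow (Cpow (unit_root N) m * Cpow (Cconj (unit_root N)) k) j) N =
  if (m =? k)%nat then RtoC (INR N) else RtoC 0.
Proof.
  intros Hm Hk. assert (HN : (0 < N)%nat) by lia.
  destruct (Compare_dec.le_lt_dec k m) as [Hkm|Hmk].
  - assert (E : (Cpow (unit_root N) m * Cpow (Cconj (unit_root N)) k)%C
    = Cpow (unit_root N) (m - k)).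
    { assert (Hk' : (Cpow (unit_root N) k * Cpow (Cconj (unit_root N)) k)%C = RtoC 1)
        by (rewrite <- Cpow_mult_l, unit_root_conj, Cpow_1_l; auto).
      replace m with ((m - k) + k)%nat at 1 by lia. rewrite Cpow_add_r, <- Cmult_assoc, Hk'. ring. }
    rewrite (csum_ext _ (fun j => Cpow (Cpow (unit_root N) (m - k)) j))
      by (intros; rewrite E; auto).
    rewrite root_sum, mod_small_eq0 by lia.
    destruct (Nat.eqb_spec (m - k) 0); destruct (Nat.eqb_spec m k); auto; lia.
  - assert (E : (Cpow (unit_root N) m * Cpow (Cconj (unit_root N)) k)%C
    = Cconj (Cpow (unit_root N) (k - m))).
    { assert (Hm' : (Cpow (unit_root N) m * Cpow (Cconj (unit_root N)) m)%C = RtoC 1)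
        by (rewrite <- Cpow_mult_l, unit_root_conj, Cpow_1_l; auto).
      rewrite Cpow_conj. replace k with (m + (k - m))%nat at 1 by lia.
      rewrite Cpow_add_r, Cmult_assoc, Hm'. ring. }
    rewrite (csum_ext _ (fun j => Cconj (Cpow (Cpow (unit_root N) (k - m)) j))).
    + rewrite <- csum_conj, root_sum, mod_small_eq0 by lia.
      destruct (Nat.eqb_spec (k - m) 0); destruct (Nat.eqb_spec m k); try lia.
      unfold Cconj, RtoC; simpl. rewrite Ropp_0. reflexivity.
    + intros. rewrite E, !Cpow_conj. auto.
Qed.

Lemma root_sum_conj N m k : (m < N)%nat -> (k < N)%nat ->
  csum (fun j => Cpow (Cpow (Cconj (unit_root N)) m * Cpow (Cconj (unit_root N)) k) j) N =
  if ((m + k) mod N =? 0)%nat then RtoC (INR N) else RtoC 0.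
Proof.
  intros Hm Hk. assert (HN : (0 < N)%nat) by lia.
  rewrite (csum_ext _ (fun j => Cconj (Cpow (Cpow (unit_root N) (m + k)) j))).
  2:{ intros. rewrite !Cpow_conj, Cpow_add_r. auto. }
  rewrite <- csum_conj, root_sum by auto.
  destruct (_ =? _)%nat; unfold Cconj, RtoC; simpl; rewrite Ropp_0; reflexivity.
Qed.

Definition avg (N : nat) (f : nat -> C) : C := (/ INR N * csum f N)%C.

Lemma avg_series (N : nat) (F : nat -> nat -> C) (L g : nat -> C) :
  (forall j, Cis (F j) (L j)) ->
  Cis (fun m => avg N (fun j => F j m * g j)%C) (avg N (fun j => L j * g j)%C).
Proof.
  intros H. apply Cis_scal. apply Cis_csum. intros j _.
  replace (L j * g j)%C with (g j * L j)%C by ring.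
  eapply Cis_ext; [|apply (Cis_scal (g j)), H]. intros m. simpl. ring.
Qed.

Lemma pull_coef (N : nat) (a : C) (f g : nat -> C) :
  avg N (fun j => a * f j * g j)%C = (a * avg N (fun j => f j * g j)%C)%C.
Proof.
  unfold avg. rewrite (csum_ext _ (fun j => a * (f j * g j))%C) by (intros; ring).
  rewrite csum_scal. ring.
Qed.

(* Averages over the N-th roots of unity omega^j of the Cauchy kernel
   G_j = 1 / (1 - x conj(omega)^j), |x| < 1, computed by expanding G_j into
   a finite geometric sum and applying discrete orthogonality. *)
Section CauchyAverages.
Variable N : nat.
Hypothesis HN : (0 < N)%nat.
Variable x : C.
Hypothesis Hx : Cmod x < 1.

Let w := unit_root N.
Let wb := Cconj (unit_root N).

Definition cauchy_kernel (j : nat) : C := (/ (1 - x * Cpow wb j))%C.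

Lemma conj_root_N : Cpow wb N = RtoC 1.
Proof. unfold wb. rewrite <- Cpow_conj, unit_root_N by auto. unfold Cconj, RtoC; simpl.
  rewrite Ropp_0; auto. Qed.

Lemma Cmod_conj_root_pow j : Cmod (Cpow wb j) = 1.
Proof. unfold wb. rewrite Cmod_pow, Cmod_conj, Cmod_unit_root. apply pow1. Qed.

Lemma one_minus_xN_nz : (1 - Cpow x N)%C <> RtoC 0.
Proof.
  apply C_neq0_of_Cmod. eapply Rlt_le_trans; [|apply Cmod_1_minus].
  rewrite Cmod_pow. pose proof (Cmod_ge_0 x).
  assert (Cmod x ^ N < 1). { destruct N. lia. apply pow_lt_1_compat. lra. lia. } lra.
Qed.

Lemma cauchy_denom_nz j : (1 - x * Cpow wb j)%C <> RtoC 0.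
Proof.
  apply C_neq0_of_Cmod. eapply Rlt_le_trans; [|apply Cmod_1_minus].
  rewrite Cmod_mult, Cmod_conj_root_pow. lra.
Qed.

Lemma cauchy_kernel_bound j : Cmod (cauchy_kernel j) <= / (1 - Cmod x).
Proof.
  unfold cauchy_kernel. rewrite Cmod_inv by apply cauchy_denom_nz. apply Rinv_le_contravar. lra.
  eapply Rle_trans; [|apply Cmod_1_minus]. rewrite Cmod_mult, Cmod_conj_root_pow. lra.
Qed.

Lemma cauchy_kernel_expand j : cauchy_kernel j
  = (csum (fun k => Cpow x k * Cpow (Cpow wb j) k) N / (1 - Cpow x N))%C.
Proof.
  pose proof (csum_geom (x * Cpow wb j) N) as H.
  rewrite Cpow_mult_l, Cpow_swap, conj_root_N, Cpow_1_l, Cmult_1_r in H.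
  rewrite (csum_ext _ (fun k => Cpow (x * Cpow wb j) k)) by (intros; rewrite Cpow_mult_l; auto).
  unfold cauchy_kernel. assert (HD := one_minus_xN_nz). rewrite <- H in HD |- *. field.
  split; auto. apply cauchy_denom_nz.
  intros E. apply HD. rewrite E. ring.
Qed.

Lemma avg_root_cauchy m : (m < N)%nat ->
  avg N (fun j => Cpow (Cpow w j) m * cauchy_kernel j)%C = (Cpow x m / (1 - Cpow x N))%C.
Proof.
  unfold avg.
  intros Hm. assert (HNr : INR N <> 0) by (apply not_0_INR; lia).
  rewrite (csum_ext _ (fun j => / (1 - Cpow x N) * csum
    (fun k => Cpow x k * Cpow (Cpow w m * Cpow wb k) j) N)%C).
  2:{ intros j _. rewrite cauchy_kernel_expand.
      assert (E : csum (fun k => Cpow x k * Cpow (Cpow w m * Cpow wb k) j)%C N =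
                  (Cpow (Cpow w j) m * csum (fun k => Cpow x k * Cpow (Cpow wb j) k)%C N)%C).
      { rewrite <- csum_scal. apply csum_ext. intros k _.
        rewrite Cpow_mult_l, (Cpow_swap w j m), (Cpow_swap wb j k). ring. }
      rewrite E. unfold Cdiv. ring. }
  rewrite csum_scal, csum_swap.
  rewrite (csum_ext _ (fun k => Cpow x k * if (m =? k)%nat then RtoC (INR N) else RtoC 0)%C).
  2:{ intros k Hk. rewrite csum_scal. unfold w, wb. rewrite root_sum_mixed by auto. auto. }
  rewrite (csum_single _ _ _ _ m) by (auto; intros; rewrite Nat.eqb_eq; lia).
  field. split. apply one_minus_xN_nz. intros E. apply HNr. injection E; auto.
Qed.

Lemma mod_eq0_below_2N e : (e < 2 * N)%nat -> ((e mod N =? 0)%nat = true <-> e = 0%nat \/ e = N).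
Proof.
  intros He. rewrite Nat.eqb_eq. destruct (Compare_dec.lt_dec e N).
  - rewrite Nat.mod_small by auto. lia.
  - rewrite <- (Nat.mod_unique e N 1 (e - N)) by lia. lia.
Qed.

Lemma avg_conj_root_cauchy m : (m < N)%nat ->
  avg N (fun j => Cpow (Cpow wb j) m * cauchy_kernel j)%C =
  (Cpow x (if (m =? 0)%nat then 0 else N - m) / (1 - Cpow x N))%C.
Proof.
  unfold avg.
  intros Hm. assert (HNr : INR N <> 0) by (apply not_0_INR; lia).
  rewrite (csum_ext _ (fun j => / (1 - Cpow x N) * csum
    (fun k => Cpow x k * Cpow (Cpow wb m * Cpow wb k) j) N)%C).
  2:{ intros j _. rewrite cauchy_kernel_expand.
      assert (E : csum (fun k => Cpow x k * Cpow (Cpow wb m * Cpow wb k) j)%C N =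
                  (Cpow (Cpow wb j) m * csum (fun k => Cpow x k * Cpow (Cpow wb j) k)%C N)%C).
      { rewrite <- csum_scal. apply csum_ext. intros k _.
        rewrite Cpow_mult_l, (Cpow_swap wb j m), (Cpow_swap wb j k). ring. }
      rewrite E. unfold Cdiv. ring. }
  rewrite csum_scal, csum_swap.
  rewrite (csum_ext _ (fun k => Cpow x k * if ((m + k) mod N =? 0)%nat then RtoC (INR N) else
    RtoC 0)%C).
  2:{ intros k Hk. rewrite csum_scal. unfold wb. rewrite root_sum_conj by auto. auto. }
  rewrite (csum_single _ _ _ _ (if (m =? 0)%nat then 0 else N - m)%nat).
  - field. split. apply one_minus_xN_nz. intros E. apply HNr. injection E; auto.
  - destruct (Nat.eqb_spec m 0); lia.
  - intros k Hk. rewrite mod_eq0_below_2N by lia. destruct (Nat.eqb_spec m 0); lia.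
Qed.

Lemma avg_root_pow m : (m < N)%nat ->
  avg N (fun j => Cpow (Cpow w j) m)%C = if (m =? 0)%nat then RtoC 1 else RtoC 0.
Proof.
  unfold avg.
  intros Hm. assert (HNr : INR N <> 0) by (apply not_0_INR; lia).
  rewrite (csum_ext _ (fun j => Cpow (Cpow w m) j)) by (intros; apply Cpow_swap).
  unfold w. rewrite root_sum, mod_small_eq0 by auto. destruct (m =? 0)%nat.
  - field. intros E. apply HNr. injection E; auto.
  - ring.
Qed.

Lemma avg_Cmod_le (f : nat -> C) B : 0 <= B -> (forall j, (j < N)%nat -> Cmod (f j) <= B) ->
  Cmod (avg N f) <= B.
Proof.
  unfold avg.
  intros HB H. assert (HNr : 0 < INR N) by (apply lt_0_INR; lia).
  rewrite Cmod_mult, Cmod_inv, Cmod_R, Rabs_pos_eq.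
  - apply Rmult_le_reg_l with (INR N); auto. rewrite <- Rmult_assoc, Rinv_r, Rmult_1_l by lra.
    eapply Rle_trans. apply csum_Cmod. eapply Rle_trans. apply rsum_le. exact H.
    rewrite rsum_const. lra.
  - lra.
  - intros E. injection E. lra.
Qed.

End CauchyAverages.

Lemma Re_cayley_formula a b : (1-a)^2 + b^2 <> 0 ->
  Re ((1 + (a,b)) / (1 - (a,b)))%C = (1 - a^2 - b^2)/((1-a)^2 + b^2).
Proof. intros H. unfold Cdiv, Cinv, Cmult, Cplus, Cminus, Copp, Re, RtoC; simpl.
field. simpl in H. lra. Qed.

Lemma cayley_bounds (y : C) s : Cmod y = s -> s < 1 ->
  (1 - s) / (1 + s) <= Re ((1 + y) / (1 - y)) /\ Cmod ((1 + y) / (1 - y)) <= (1 + s) / (1 - s).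
Proof.
  intros Hs Hs1. pose proof (Cmod_ge_0 y). 
  assert (Hnz : (1 - y)%C <> RtoC 0).
  { apply C_neq0_of_Cmod. eapply Rlt_le_trans; [|apply Cmod_1_minus]. lra. }
  split.
  - destruct y as [a b]. pose proof (Cmod2_alt (a, b)) as Hsq. rewrite Hs in Hsq. simpl in Hsq.
    pose proof (re_le_Cmod (a, b)) as Ha. rewrite Hs in Ha. simpl in Ha.
    apply Rabs_le_between in Ha.
    assert (Hd : 0 < (1 - a) ^ 2 + b ^ 2) by nra.
    assert (E : Re ((1 + (a, b)) / (1 - (a, b)))%C = (1 - a ^ 2 - b ^ 2) / ((1 - a) ^ 2 + b ^ 2)).
    { apply Re_cayley_formula. lra. }
    rewrite E. apply Rmult_le_reg_r with ((1 + s) * ((1 - a) ^ 2 + b ^ 2)). nra.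
    replace ((1 - s) / (1 + s) * ((1 + s) * ((1 - a) ^ 2 + b ^ 2)))
      with ((1 - s) * ((1 - a) ^ 2 + b ^ 2)) by (field; lra).
    replace ((1 - a ^ 2 - b ^ 2) / ((1 - a) ^ 2 + b ^ 2) * ((1 + s) * ((1 - a) ^ 2 + b ^ 2)))
      with ((1 - a ^ 2 - b ^ 2) * (1 + s)) by (field; lra).
    nra.
  - rewrite Cmod_div by auto. apply Rmult_le_reg_r with (Cmod (1 - y)).
    apply Cmod_gt_0; auto. unfold Rdiv at 1. rewrite Rmult_assoc, Rinv_l, Rmult_1_r.
    2:{ intros E. apply Hnz. apply Cmod_eq_0. auto. }
    pose proof (Cmod_1_minus y). pose proof (Cmod_triangle 1 y). rewrite Cmod_1 in H1.
    apply Rle_trans with (1 + s). lra.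
    apply Rle_trans with ((1 + s) / (1 - s) * (1 - s)). right; field; lra.
    apply Rmult_le_compat_l. apply Rdiv_le_0_compat; lra. lra.
Qed.

(* Error terms are controlled by partial sums of t^max(k, N), which stay
   below tail_bound t N = N t^N + t^N / (1 - t); this tends to 0 with N. *)
Lemma sum_pow_max_exact (t : R) N : 0 <= t < 1 -> forall n,
  @eq R (sum_n (fun k => t ^ (Nat.max k N)) n)
  (if (n <? N)%nat then INR (S n) * t ^ N else INR N * t ^ N + (t ^ N - t ^ S n) / (1 - t)).
Proof.
  intros Ht. induction n.
  - rewrite sum_O. destruct (Nat.ltb_spec 0 N); cbv iota beta.
    + rewrite Nat.max_r by lia. simpl. ring.
    + assert (N = 0%nat) by lia. subst. simpl. field. lra.
  - rewrite sum_Sn, IHn. change (plus ?a ?b) with (a + b).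
    destruct (Nat.ltb_spec n N); destruct (Nat.ltb_spec (S n) N); cbv iota beta.
    + rewrite Nat.max_r by lia. rewrite (S_INR (S n)). ring.
    + assert (S n = N) by lia. subst N. rewrite Nat.max_l by lia.
      replace (t ^ S (S n)) with (t * t ^ S n) by (simpl; ring). field. lra.
    + lia.
    + rewrite Nat.max_l by lia.
      replace (t ^ S (S n)) with (t * t ^ S n) by (simpl; ring). field. lra.
Qed.

Definition tail_bound (t : R) (N : nat) := INR N * t ^ N + t ^ N / (1 - t).

Lemma sum_pow_max_le (t : R) N : 0 <= t < 1 -> forall n,
  sum_n (fun k => t ^ (Nat.max k N)) n <= tail_bound t N.
Proof.
  intros Ht n. rewrite sum_pow_max_exact by auto. unfold tail_bound.
  pose proof (pow_le t N (proj1 Ht)). pose proof (pow_le t (S n) (proj1 Ht)).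
  assert (0 <= t ^ N / (1 - t)) by (apply Rdiv_le_0_compat; lra).
  destruct (Nat.ltb_spec n N).
  - assert (INR (S n) <= INR N) by (apply le_INR; lia). nra.
  - assert ((t ^ N - t ^ S n) / (1 - t) <= t ^ N / (1 - t)).
    { unfold Rdiv. apply Rmult_le_compat_r. left; apply Rinv_0_lt_compat; lra. lra. } lra.
Qed.

Lemma tail_bound_small (t : R) : 0 <= t < 1 -> forall eps, 0 < eps -> exists N, (0 < N)%nat
  /\ tail_bound t N < eps.
Proof.
  intros Ht eps He.
  pose proof (lim_nqn t Ht) as H1. apply is_lim_seq_spec in H1.
  assert (Ht' : Rabs t < 1) by (rewrite Rabs_pos_eq; lra).
  pose proof (is_lim_seq_geom t Ht') as H2. apply is_lim_seq_spec in H2.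
  destruct (H1 (mkposreal (eps / 2) ltac:(lra))) as [N1 HN1].
  destruct (H2 (mkposreal (eps / 2 * (1 - t)) ltac:(apply Rmult_lt_0_compat; lra))) as [N2 HN2].
  exists (S (N1 + N2)). split. lia.
  specialize (HN1 (S (N1 + N2)) ltac:(lia)). specialize (HN2 (S (N1 + N2)) ltac:(lia)).
  simpl pos in HN1, HN2. rewrite Rminus_0_r in HN1, HN2.
  apply Rabs_lt_between in HN1. apply Rabs_lt_between in HN2. unfold tail_bound.
  assert (t ^ S (N1 + N2) / (1 - t) < eps / 2).
  { apply Rmult_lt_reg_r with (1 - t). lra. unfold Rdiv. rewrite Rmult_assoc, Rinv_l; lra. }
  lra.
Qed.

Lemma le_of_le_plus_tail (t X Y D : R) : 0 <= t < 1 -> 0 <= D ->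
  (forall N, (0 < N)%nat -> X <= Y + D * tail_bound t N) -> X <= Y.
Proof.
  intros Ht HD H. destruct (Rle_lt_dec X Y) as [|Hlt]; auto. exfalso.
  destruct (tail_bound_small t Ht ((X - Y) / (D + 1))) as [N [HN HB]].
  apply Rdiv_lt_0_compat; lra.
  specialize (H N HN). assert (0 <= tail_bound t N).
  { unfold tail_bound. apply Rplus_le_le_0_compat. apply Rmult_le_pos. apply pos_INR.
  apply pow_le; lra.
    apply Rdiv_le_0_compat. apply pow_le; lra. lra. }
  assert (D * tail_bound t N <= (D + 1) * tail_bound t N) by nra.
  assert ((D + 1) * tail_bound t N < X - Y).
  { apply Rmult_lt_reg_r with (/ (D + 1)). apply Rinv_0_lt_compat; lra.
    replace ((D + 1) * tail_bound t N * / (D + 1)) with (tail_bound t N) by (field; lra).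
    exact HB. }
  lra.
Qed.

Lemma sum_n_scal_R (a : R) (u : nat -> R) n : @eq R (sum_n (fun k => a * u k) n) (a * sum_n u n).
Proof. induction n. rewrite !sum_O; auto. rewrite !sum_Sn, IHn.
  change (a * sum_n u n + a * u (S n) = a * (sum_n u n + u (S n))). ring. Qed.

Lemma series_error_bound (c e : nat -> C) (rho M t s : R) N (L : C) :
  0 <= t < 1 -> s < 1 ->
  (forall m, Cmod (c m) * rho ^ m <= M * t ^ m) -> 0 <= rho ->
  (forall m, t ^ m * Cmod (e m) <= 2 / (1 - s) * t ^ (Nat.max m N)) ->
  Cis (fun m => c m * RtoC (rho ^ m) * e m)%C L -> Cmod L <= M * (2 / (1 - s)) * tail_bound t N.
Proof.
  intros Ht Hs Hc Hr He HL. apply (Cis_norm_le _ _ _ HL). intros n.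
  apply Rle_trans with (sum_n (fun k => M * (2 / (1 - s)) * t ^ (Nat.max k N)) n).
  - apply sum_n_m_le. intros k. rewrite !Cmod_mult, Cmod_RtoC_pos by (apply pow_le; auto).
    pose proof (Hc k). pose proof (He k). pose proof (Cmod_ge_0 (e k)).
    pose proof (Cmod_ge_0 (c k)). pose proof (pow_le rho k Hr).
    assert (0 <= M). { pose proof (Hc O) as X. simpl in X. pose proof (Cmod_ge_0 (c O)). nra. }
    apply Rle_trans with (M * t ^ k * Cmod (e k)). apply Rmult_le_compat_r; auto.
    replace (M * (2 / (1 - s)) * t ^ Nat.max k N) with (M * (2 / (1 - s) * t ^ Nat.max k N))
      by ring.
    rewrite Rmult_assoc. apply Rmult_le_compat_l; auto.
  - rewrite sum_n_scal_R. apply Rmult_le_compat_l.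
    + assert (0 <= M). { pose proof (Hc O) as X. simpl in X. pose proof (Cmod_ge_0 (c O)). nra. }
      apply Rmult_le_pos; auto. apply Rdiv_le_0_compat; lra.
    + apply sum_pow_max_le; auto.
Qed.

(* For every m (not only m < N), the Fourier coefficients of the discrete
   averages differ from their continuous values x^m, 1 or 0 by at most
   2/(1-s) t^max(m,N) t^(-m), where |x| = s <= t < 1. *)
Section AverageErrors.
Variable N : nat.
Hypothesis HN : (0 < N)%nat.
Variables (x : C) (s t : R).
Hypothesis Hxs : Cmod x = s.
Hypothesis Hs1 : s < 1.
Hypothesis Hst : s <= t.
Hypothesis Ht1 : t < 1.

Let w := unit_root N.
Let wb := Cconj (unit_root N).
Let Hx : Cmod x < 1. Proof. lra. Qed.

Lemma ae_s_nonneg : 0 <= s. Proof. rewrite <- Hxs. apply Cmod_ge_0. Qed.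

Lemma ae_denom_bound : 1 - s <= Cmod (1 - Cpow x N).
Proof.
  eapply Rle_trans; [|apply Cmod_1_minus]. rewrite Cmod_pow, Hxs.
  pose proof ae_s_nonneg. assert (s ^ N <= s).
  { destruct N. lia. change (s ^ S n) with (s * s ^ n). pose proof (pow_le1 s n ltac:(lra)). nra. }
  lra.
Qed.

Lemma ae_frac_bound k : Cmod (Cpow x k / (1 - Cpow x N))%C <= s ^ k / (1 - s).
Proof.
  pose proof ae_s_nonneg. pose proof ae_denom_bound.
  rewrite Cmod_div by (apply one_minus_xN_nz; auto). rewrite Cmod_pow, Hxs.
  unfold Rdiv. apply Rmult_le_compat_l. apply pow_le; auto.
  apply Rinv_le_contravar; lra.
Qed.

Definition cauchy_coef1 m := avg N (fun j => Cpow (Cpow w j) m * cauchy_kernel N x j)%C.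
Definition cauchy_coef2 m := avg N (fun j => Cpow (Cpow wb j) m * cauchy_kernel N x j)%C.
Definition root_coef m := avg N (fun j => Cpow (Cpow w j) m)%C.
Definition delta0 (m : nat) : C := if (m =? 0)%nat then RtoC 1 else RtoC 0.

(* Crude bound, used when m >= N. *)
Lemma avg_unit_cauchy_bound (a : C) m : Cmod a = 1 ->
  Cmod (avg N (fun j => Cpow (Cpow a j) m * cauchy_kernel N x j)%C) <= / (1 - s).
Proof.
  intros Ha. apply avg_Cmod_le; auto. left. apply Rinv_0_lt_compat; lra.
  intros j _. rewrite Cmod_mult, !Cmod_pow, Ha, !pow1, Rmult_1_l, <- Hxs.
  apply cauchy_kernel_bound; auto.
Qed.

Lemma ae_tpow_le1 k : t ^ k <= 1.
Proof. pose proof ae_s_nonneg. apply pow_le1; lra. Qed.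

Lemma ae_spow_le_tpow k : s ^ k <= t ^ k.
Proof. pose proof ae_s_nonneg. apply pow_incr; lra. Qed.

Lemma cauchy_coef1_error m : t ^ m * Cmod (cauchy_coef1 m - Cpow x m)
  <= 2 / (1 - s) * t ^ (Nat.max m N).
Proof.
  pose proof ae_s_nonneg. assert (Hts : 0 < 1 - s) by lra.
  pose proof (pow_le t m ltac:(lra)). pose proof (ae_tpow_le1 m).
  destruct (Compare_dec.lt_dec m N) as [Hm|Hm].
  - rewrite Nat.max_r by lia. unfold cauchy_coef1, w. rewrite avg_root_cauchy by auto.
    replace (Cpow x m / (1 - Cpow x N) - Cpow x m)%C with (Cpow x m * (Cpow x N / (1 - Cpow x N)))%C
      by (field; apply one_minus_xN_nz; auto).
    rewrite Cmod_mult, Cmod_pow, Hxs.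
    pose proof (ae_frac_bound N). pose proof (pow_le s m H). pose proof (pow_le1 s m ltac:(lra)).
    pose proof (ae_spow_le_tpow N). pose proof (Cmod_ge_0 (Cpow x N / (1 - Cpow x N))%C).
    apply Rle_trans with (1 * (1 * (s ^ N / (1 - s)))).
    apply Rmult_le_compat; auto. apply Rmult_le_pos; auto. apply Rmult_le_compat; auto.
    rewrite !Rmult_1_l. unfold Rdiv. rewrite Rmult_comm. 
    replace (2 * / (1 - s) * t ^ N) with (/ (1 - s) * (2 * t ^ N)) by ring.
    apply Rmult_le_compat_l. left; apply Rinv_0_lt_compat; lra.
    pose proof (pow_le t N ltac:(lra)). lra.
  - rewrite Nat.max_l by lia.
    assert (Cmod (cauchy_coef1 m - Cpow x m) <= 2 / (1 - s)).
    { unfold Cminus. eapply Rle_trans. apply Cmod_triangle. rewrite Cmod_opp, Cmod_pow, Hxs.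
      pose proof (avg_unit_cauchy_bound w m (Cmod_unit_root N)). unfold cauchy_coef1.
      pose proof (pow_le1 s m ltac:(lra)).
      assert (1 <= / (1 - s)). { rewrite <- Rinv_1. apply Rinv_le_contravar; lra. }
      unfold Rdiv. lra. }
    rewrite Rmult_comm. apply Rmult_le_compat_r; auto.
Qed.

Lemma cauchy_coef2_error m : t ^ m * Cmod (cauchy_coef2 m - delta0 m)
  <= 2 / (1 - s) * t ^ (Nat.max m N).
Proof.
  pose proof ae_s_nonneg. assert (Hts : 0 < 1 - s) by lra.
  pose proof (pow_le t m ltac:(lra)). pose proof (ae_tpow_le1 m).
  assert (Hinv : 0 < / (1 - s)) by (apply Rinv_0_lt_compat; lra).
  destruct (Compare_dec.lt_dec m N) as [Hm|Hm].
  - rewrite Nat.max_r by lia. unfold cauchy_coef2, wb. rewrite avg_conj_root_cauchy by auto.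
  unfold delta0.
    destruct (Nat.eqb_spec m 0) as [E|E].
    + subst m. simpl pow. rewrite Rmult_1_l.
      replace (Cpow x 0 / (1 - Cpow x N) - 1)%C with (Cpow x N / (1 - Cpow x N))%C
        by (simpl; field; apply one_minus_xN_nz; auto).
      eapply Rle_trans. apply ae_frac_bound. pose proof (ae_spow_le_tpow N).
      pose proof (pow_le t N ltac:(lra)).
      unfold Rdiv. nra.
    + replace (Cpow x (N - m) / (1 - Cpow x N) - 0)%C with (Cpow x (N - m) / (1 - Cpow x N))%C
      by ring.
      pose proof (ae_frac_bound (N - m)). pose proof (ae_spow_le_tpow (N - m)).
      pose proof (pow_le s (N - m) H).
      assert (Htt : t ^ m * t ^ (N - m) = t ^ N) by (rewrite <- pow_add; f_equal; lia).
      apply Rle_trans with (t ^ m * (t ^ (N - m) / (1 - s))).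
      apply Rmult_le_compat_l; auto. eapply Rle_trans; eauto. unfold Rdiv.
      apply Rmult_le_compat_r; lra.
      replace (t ^ m * (t ^ (N - m) / (1 - s))) with (/ (1 - s) * (t ^ m * t ^ (N - m)))
        by (field; lra).
      rewrite Htt. pose proof (pow_le t N ltac:(lra)). unfold Rdiv. nra.
  - rewrite Nat.max_l by lia. unfold delta0. destruct (Nat.eqb_spec m 0); [lia|].
    replace (cauchy_coef2 m - 0)%C with (cauchy_coef2 m) by ring.
    pose proof (avg_unit_cauchy_bound wb m
      ltac:(unfold wb; rewrite Cmod_conj; apply Cmod_unit_root)). fold (cauchy_coef2 m) in H2.
    apply Rle_trans with (t ^ m * / (1 - s)). apply Rmult_le_compat_l; auto.
    unfold Rdiv. nra.
Qed.

Lemma root_coef_error m : t ^ m * Cmod (root_coef m - delta0 m) <= 2 / (1 - s) * t ^ (Nat.max m N).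
Proof.
  pose proof ae_s_nonneg. assert (Hts : 0 < 1 - s) by lra.
  pose proof (pow_le t m ltac:(lra)). pose proof (ae_tpow_le1 m).
  assert (Hinv : 1 <= / (1 - s)) by (rewrite <- Rinv_1; apply Rinv_le_contravar; lra).
  destruct (Compare_dec.lt_dec m N) as [Hm|Hm].
  - unfold root_coef, w. rewrite avg_root_pow by auto. unfold delta0.
    replace ((if (m =? 0)%nat then RtoC 1 else RtoC 0) -
      (if (m =? 0)%nat then RtoC 1 else RtoC 0))%C
      with (RtoC 0) by ring. rewrite Cmod_0, Rmult_0_r. apply Rmult_le_pos.
    apply Rdiv_le_0_compat; lra. apply pow_le; lra.
  - rewrite Nat.max_l by lia. unfold delta0. destruct (Nat.eqb_spec m 0); [lia|].
    replace (root_coef m - 0)%C with (root_coef m) by ring.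
    assert (Cmod (root_coef m) <= 1).
    { unfold root_coef. apply avg_Cmod_le; auto. lra. intros j _. rewrite !Cmod_pow. unfold w.
    rewrite Cmod_unit_root, !pow1. lra. }
    apply Rle_trans with (t ^ m * 1). apply Rmult_le_compat_l; auto.
    unfold Rdiv. nra.
Qed.

End AverageErrors.

(* Let p = sum c_m z^m on the disk, c_0 = 1,
   Re p > 0, and |z| < rho < 1 with |c_m| rho^m <= M t^m, s = |z|/rho <= t < 1.
   With P_j = p(rho omega^j) and x = z / rho, the average
       S = avg_j Re(P_j) (1 + x conj(omega)^j)/(1 - x conj(omega)^j)
   equals T1 + T2 - Re T0, where T1 = avg P_j G_j ~ p(z), T2 = avg conj(P_j) G_j
   ~ 1 and T0 = avg P_j ~ 1.  Since Re P_j > 0, the kernel bounds give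
   (1-s)/(1+s) Re T0 <= Re S and |S| <= (1+s)/(1-s) Re T0. *)
Section DiscretePoisson.
Variables (c : nat -> C) (p : C -> C).
Hypothesis Hs : series_on_disk c p.
Hypothesis Hc0 : c O = RtoC 1.
Hypothesis Hpos : forall zeta, Cmod zeta < 1 -> 0 < Re (p zeta).
Variables (z : C) (rho M t : R).
Hypothesis Hz : Cmod z < rho.
Hypothesis Hrho : rho < 1.
Hypothesis HMt : forall m, Cmod (c m) * rho ^ m <= M * t ^ m.
Hypothesis Ht : 0 <= t < 1.
Hypothesis Hst : Cmod z / rho <= t.

Let s := Cmod z / rho.
Let x := (z * / RtoC rho)%C.

Lemma dp_rho_pos : 0 < rho.
Proof. pose proof (Cmod_ge_0 z). lra. Qed.

Lemma dp_x_mod : Cmod x = s.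
Proof.
  pose proof dp_rho_pos. unfold x, s. rewrite Cmod_mult, Cmod_inv, Cmod_RtoC_pos; try lra.
  unfold Rdiv. auto. intros E. injection E. lra.
Qed.

Lemma dp_s_lt_1 : s < 1.
Proof. pose proof dp_rho_pos. unfold s. apply Rmult_lt_reg_r with rho; auto. unfold Rdiv.
  rewrite Rmult_assoc, Rinv_l; lra. Qed.

Lemma dp_s_nonneg : 0 <= s.
Proof. pose proof dp_rho_pos. unfold s. apply Rdiv_le_0_compat. apply Cmod_ge_0. lra. Qed.

Lemma dp_z_eq : z = (RtoC rho * x)%C.
Proof. pose proof dp_rho_pos. unfold x. field. intros E. injection E. lra. Qed.

Variable N : nat.
Hypothesis HN : (0 < N)%nat.

Let w := unit_root N.
Let wb := Cconj (unit_root N).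
Let Pj j := p (RtoC rho * Cpow w j)%C.

Lemma dp_node_in_disk j : Cmod (RtoC rho * Cpow w j)%C < 1.
Proof.
  pose proof dp_rho_pos. rewrite Cmod_mult, Cmod_pow, Cmod_RtoC_pos by lra. unfold w.
  rewrite Cmod_unit_root, pow1. lra.
Qed.

Lemma dp_node_series j : Cis (fun m => c m * RtoC (rho ^ m) * Cpow (Cpow w j) m)%C (Pj j).
Proof.
  pose proof (Hs _ (dp_node_in_disk j)) as H. apply is_pseries_C in H. eapply Cis_ext; [|exact H].
  intros m. simpl. rewrite Cpow_mult_l, RtoC_pow. ring.
Qed.

Lemma dp_node_series_conj j : Cis (fun m => Cconj (c m) * RtoC (rho ^ m) * Cpow (Cpow wb j) m)%C
  (Cconj (Pj j)).
Proof.
  eapply Cis_ext; [|apply Cis_conj, dp_node_series]. intros m. simpl.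
  rewrite !Cmult_conj, Cconj_RtoC, !Cpow_conj. auto.
Qed.

Let T1 := avg N (fun j => Pj j * cauchy_kernel N x j)%C.
Let T2 := avg N (fun j => Cconj (Pj j) * cauchy_kernel N x j)%C.
Let T0 := avg N (fun j => Pj j * RtoC 1)%C.
Let T0c := avg N (fun j => Cconj (Pj j) * RtoC 1)%C.

Lemma dp_T1_series : Cis (fun m => c m * RtoC (rho ^ m) * cauchy_coef1 N x m)%C T1.
Proof.
  eapply Cis_ext; [|apply (avg_series N _ Pj (cauchy_kernel N x) dp_node_series)]. intros m. simpl.
  rewrite pull_coef. auto.
Qed.

Lemma dp_T2_series : Cis (fun m => Cconj (c m) * RtoC (rho ^ m) * cauchy_coef2 N x m)%C T2.
Proof.
  eapply Cis_ext; [|apply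
    (avg_series N _ (fun j => Cconj (Pj j)) (cauchy_kernel N x) dp_node_series_conj)]. intros m.
    simpl.
  rewrite pull_coef. auto.
Qed.

Lemma dp_T0_series : Cis (fun m => c m * RtoC (rho ^ m) * root_coef N m)%C T0.
Proof.
  eapply Cis_ext; [|apply (avg_series N _ Pj (fun _ => RtoC 1) dp_node_series)]. intros m. simpl.
  rewrite pull_coef. unfold root_coef, avg. f_equal. f_equal. apply csum_ext. intros.
  apply Cmult_1_r.
Qed.

Lemma dp_pz_series : Cis (fun m => c m * RtoC (rho ^ m) * Cpow x m)%C (p z).
Proof.
  assert (Cmod z < 1) by lra. pose proof (Hs _ H) as H'. apply is_pseries_C in H'.
  eapply Cis_ext; [|exact H']. intros m. simpl. rewrite dp_z_eq at 1.
  rewrite Cpow_mult_l, RtoC_pow. ring.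
Qed.

Let Cc := M * (2 / (1 - s)).

Lemma dp_conj_coef_bound : forall m, Cmod (Cconj (c m)) * rho ^ m <= M * t ^ m.
Proof. intros. rewrite Cmod_conj. auto. Qed.

Lemma dp_T1_error : Cmod (T1 - p z) <= Cc * tail_bound t N.
Proof.
  pose proof dp_rho_pos. pose proof dp_x_mod. pose proof dp_s_lt_1.
  apply (series_error_bound c (fun m => cauchy_coef1 N x m - Cpow x m)%C rho M t s N); auto; try
    lra.
  - intros m. exact (cauchy_coef1_error N HN x s t dp_x_mod dp_s_lt_1 Hst (proj2 Ht) m).
  - replace (T1 - p z)%C with (T1 + -1 * p z)%C by ring.
    eapply Cis_ext; [|apply (Cis_plus _ _ _ _ dp_T1_series (Cis_scal (-1) _ _ dp_pz_series))].
    intros m. simpl. ring. 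
Qed.

Lemma dp_T2_error : Cmod (T2 - 1) <= Cc * tail_bound t N.
Proof.
  pose proof dp_rho_pos. pose proof dp_x_mod. pose proof dp_s_lt_1.
  apply (series_error_bound (fun m => Cconj (c m)) (fun m => cauchy_coef2 N x m - delta0 m)%C rho
    M t s N); auto; try lra.
  - exact dp_conj_coef_bound.
  - intros m. exact (cauchy_coef2_error N HN x s t dp_x_mod dp_s_lt_1 Hst (proj2 Ht) m).
  - pose proof (Cis_delta0 (fun m => Cconj (c m) * RtoC (rho ^ m))%C) as Hd.
    simpl in Hd. rewrite Hc0 in Hd. 
    replace (Cconj 1 * 1)%C with (RtoC 1) in Hd by (rewrite Cconj_RtoC; ring).
    replace (T2 - 1)%C with (T2 + -1 * 1)%C by ring.
    eapply Cis_ext; [|apply (Cis_plus _ _ _ _ dp_T2_series (Cis_scal (-1) _ _ Hd))].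
    intros m. unfold delta0. simpl. ring.
Qed.

Lemma dp_T0_error : Cmod (T0 - 1) <= Cc * tail_bound t N.
Proof.
  pose proof dp_rho_pos. pose proof dp_x_mod. pose proof dp_s_lt_1.
  apply (series_error_bound c (fun m => root_coef N m - delta0 m)%C rho M t s N); auto; try lra.
  - intros m. exact (root_coef_error N HN x s t dp_x_mod dp_s_lt_1 Hst (proj2 Ht) m).
  - pose proof (Cis_delta0 (fun m => c m * RtoC (rho ^ m))%C) as Hd.
    simpl in Hd. rewrite Hc0 in Hd. 
    replace (1 * 1)%C with (RtoC 1) in Hd by ring.
    replace (T0 - 1)%C with (T0 + -1 * 1)%C by ring.
    eapply Cis_ext; [|apply (Cis_plus _ _ _ _ dp_T0_series (Cis_scal (-1) _ _ Hd))].
    intros m. unfold delta0. simpl. ring.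
Qed.

Let u j := Re (Pj j).
Let Kj j := (2 * cauchy_kernel N x j - 1)%C.
Let S := avg N (fun j => RtoC (u j) * Kj j)%C.

Lemma dp_INR_N_nz : INR N <> 0.
Proof. apply not_0_INR. lia. Qed.

Lemma dp_INR_N_nzC : RtoC (INR N) <> RtoC 0.
Proof. intros E. injection E. apply dp_INR_N_nz. Qed.

Lemma dp_T0c_conj : T0c = Cconj T0.
Proof.
  unfold T0c, T0, avg. rewrite Cmult_conj, Cinv_conj by apply dp_INR_N_nzC.
  rewrite Cconj_RtoC, csum_conj.
  f_equal. apply csum_ext. intros. rewrite Cmult_conj, Cconj_RtoC. auto.
Qed.

(* Re P_j (2 G_j - 1) = P_j G_j + conj(P_j) G_j - (P_j + conj(P_j))/2. *)
Lemma dp_S_decomp : S = (T1 + T2 - (T0 + T0c) / 2)%C.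
Proof.
  unfold S, avg. rewrite
    (csum_ext _ (fun j => Pj j * cauchy_kernel N x j + Cconj (Pj j) * cauchy_kernel N x j
      + (- / 2) * (Pj j * RtoC 1) + (- / 2) * (Cconj (Pj j) * RtoC 1))%C).
  - rewrite !csum_plus, !csum_scal. unfold T1, T2, T0, T0c, avg. field. apply dp_INR_N_nzC.
  - intros j _. unfold u, Kj. rewrite re_alt. field.
Qed.

Lemma dp_Kj_cayley j : Kj j = ((1 + x * Cpow wb j) / (1 - x * Cpow wb j))%C.
Proof.
  unfold Kj, cauchy_kernel. fold wb. field. apply cauchy_denom_nz; auto. rewrite dp_x_mod.
  apply dp_s_lt_1.
Qed.

Lemma dp_Kj_mod j : Cmod (x * Cpow wb j) = s.
Proof. rewrite Cmod_mult, Cmod_pow, dp_x_mod. unfold wb. rewrite Cmod_conj, Cmod_unit_root, pow1.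
  ring. Qed.

Lemma dp_u_pos j : 0 < u j.
Proof. unfold u. apply Hpos. apply dp_node_in_disk. Qed.

(* The positivity of Re P_j transfers the kernel bounds to S. *)
Lemma dp_S_re_lower : (1 - s) / (1 + s) * Re T0 <= Re S.
Proof.
  pose proof dp_INR_N_nz. assert (HN' : 0 < INR N) by (apply lt_0_INR; lia).
  unfold S, T0, avg. rewrite <- !RtoC_inv by auto. rewrite !re_scal_l, !Re_csum.
  rewrite (rsum_ext (fun j => Re (Pj j * RtoC 1)) u) by (intros; apply Re_mult1).
  rewrite (rsum_ext (fun j => Re (RtoC (u j) * Kj j)) (fun j => u j * Re (Kj j)))
    by (intros; apply re_scal_l).
  rewrite <- Rmult_assoc, (Rmult_comm _ (/ INR N)), Rmult_assoc. apply Rmult_le_compat_l.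
  left. apply Rinv_0_lt_compat; auto.
  rewrite <- rsum_scal. apply rsum_le. intros j _. pose proof (dp_u_pos j). rewrite dp_Kj_cayley.
  destruct (cayley_bounds _ s (dp_Kj_mod j) dp_s_lt_1) as [Ha Hb]. nra.
Qed.

Lemma dp_S_mod_upper : Cmod S <= (1 + s) / (1 - s) * Re T0.
Proof.
  pose proof dp_INR_N_nz. assert (HN' : 0 < INR N) by (apply lt_0_INR; lia).
  unfold S, T0, avg. rewrite <- !RtoC_inv by auto. rewrite re_scal_l, Re_csum.
  rewrite (rsum_ext (fun j => Re (Pj j * RtoC 1)) u) by (intros; apply Re_mult1).
  rewrite Cmod_mult, Cmod_RtoC_pos by (left; apply Rinv_0_lt_compat; auto).
  rewrite <- Rmult_assoc, (Rmult_comm _ (/ INR N)), Rmult_assoc. apply Rmult_le_compat_l.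
  left. apply Rinv_0_lt_compat; auto.
  eapply Rle_trans. apply csum_Cmod. rewrite <- rsum_scal. apply rsum_le. intros j _.
  rewrite Cmod_mult, Cmod_RtoC_pos by (left; apply dp_u_pos). pose proof (dp_u_pos j).
  rewrite dp_Kj_cayley.
  destruct (cayley_bounds _ s (dp_Kj_mod j) dp_s_lt_1) as [Ha Hb]. nra.
Qed.

Lemma dp_S_close : Cmod (S - p z) <= 3 * (Cc * tail_bound t N).
Proof.
  pose proof dp_T1_error. pose proof dp_T2_error. pose proof dp_T0_error.
  rewrite dp_S_decomp, dp_T0c_conj.
  replace (T1 + T2 - (T0 + Cconj T0) / 2 - p z)%C with
    ((T1 - p z) + (T2 - 1) + (- / 2) * ((T0 - 1) + Cconj (T0 - 1)))%C
    by (rewrite Cminus_conj, Cconj_RtoC; field).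
  eapply Rle_trans. apply Cmod_triangle. eapply Rle_trans. apply Rplus_le_compat_r.
  apply Cmod_triangle.
  rewrite Cmod_mult. eapply Rle_trans. apply Rplus_le_compat_l. apply Rmult_le_compat_l.
  apply Cmod_ge_0.
  apply Cmod_triangle. rewrite Cmod_conj.
  replace (Cmod (- / 2)) with (/ 2).
  - lra.
  - rewrite Cmod_opp, Cmod_inv, Cmod_RtoC_pos; try lra. intros E. injection E. lra.
Qed.

Lemma harnack_discrete : (1 - s) / (1 + s) - 4 * (Cc * tail_bound t N) <= Re (p z) /\
  Cmod (p z) <= (1 + s) / (1 - s) + ((1 + s) / (1 - s) + 3) * (Cc * tail_bound t N).
Proof.
  set (B := Cc * tail_bound t N). pose proof dp_S_close as Hdiff. pose proof dp_T0_error as H0.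
  fold B in Hdiff, H0. pose proof dp_s_nonneg. pose proof dp_s_lt_1.
  assert (HB : 0 <= B) by (eapply Rle_trans; [apply Cmod_ge_0|exact H0]).
  assert (HT0 : 1 - B <= Re T0 <= 1 + B).
  { replace (Re T0) with (1 + Re (T0 - 1)) by (unfold Re; simpl; ring).
    pose proof (Re_ge_negCmod (T0 - 1)). pose proof (Re_le_Cmod (T0 - 1)). lra. }
  destruct HT0 as [HT0l HT0u]. pose proof dp_S_re_lower. pose proof dp_S_mod_upper.
  assert (Hk : 0 < (1 - s) / (1 + s) <= 1).
  { split. apply Rdiv_lt_0_compat; lra. apply Rmult_le_reg_r with (1 + s). lra.
    unfold Rdiv. rewrite Rmult_assoc, Rinv_l; lra. }
  assert (HK : 0 < (1 + s) / (1 - s)) by (apply Rdiv_lt_0_compat; lra).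
  split.
  - replace (Re (p z)) with (Re S - Re (S - p z)) by (unfold Re; simpl; ring).
    pose proof (Re_le_Cmod (S - p z)). nra.
  - replace (p z) with (S - (S - p z))%C by ring.
    eapply Rle_trans. unfold Cminus at 1. apply Cmod_triangle. rewrite Cmod_opp. nra.
Qed.

End DiscretePoisson.

(* Harnack's inequality on the circle |zeta| = rho < 1: the discrete
   estimate holds for every N and its error term tends to 0. *)
Lemma harnack_radius (c : nat -> C) (p : C -> C) :
  series_on_disk c p -> c O = RtoC 1 -> (forall zeta, Cmod zeta < 1 -> 0 < Re (p zeta)) ->
  forall z rho, Cmod z < rho -> rho < 1 ->
  (rho - Cmod z) / (rho + Cmod z) <= Re (p z) /\ Cmod (p z) <= (rho + Cmod z) / (rho - Cmod z).
Proof.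
  intros Hs Hc0 Hpos z rho Hz Hrho. pose proof (Cmod_ge_0 z). set (r := Cmod z) in *.
  set (rho' := (rho + 1) / 2).
  assert (Hrho' : rho < rho') by (unfold rho'; lra).
  destruct (ps_coef_bound c p Hs rho') as [M [HM0 HM]]. unfold rho'; lra.
  set (s := r / rho).
  assert (Hs01 : 0 <= s < 1).
  { unfold s. split. apply Rdiv_le_0_compat; lra.
    apply Rmult_lt_reg_r with rho; [lra|]. unfold Rdiv. rewrite Rmult_assoc, Rinv_l; lra. }
  pose proof (tw_q_range z rho rho' Hz Hrho') as Hq.
  set (t := Rmax (rho / rho') s).
  assert (Ht : 0 <= t < 1) by (unfold t; apply Rmax_case; lra).
  assert (HMt : forall m, Cmod (c m) * rho ^ m <= M * t ^ m).
  { intros m. eapply Rle_trans. apply (tw_coef_bound c z rho rho' M Hz Hrho' HM m).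
    apply Rmult_le_compat_l; auto. apply pow_incr. split; [lra | apply Rmax_l]. }
  pose proof (fun N HN => harnack_discrete c p Hs Hc0 Hpos z rho M t Hz Hrho HMt Ht
                            (Rmax_r _ _) N HN) as HK.
  fold r s in HK.
  replace ((rho - r) / (rho + r)) with ((1 - s) / (1 + s)) by (unfold s; field; lra).
  replace ((rho + r) / (rho - r)) with ((1 + s) / (1 - s)) by (unfold s; field; lra).
  assert (HC : 0 <= M * (2 / (1 - s))) by (apply Rmult_le_pos; auto; apply Rdiv_le_0_compat; lra).
  assert (0 < (1 + s) / (1 - s)) by (apply Rdiv_lt_0_compat; lra).
  split.
  - apply (le_of_le_plus_tail t _ _ (4 * (M * (2 / (1 - s))))); auto. lra.
    intros N HN. destruct (HK N HN) as [H1 _]. lra.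
  - apply (le_of_le_plus_tail t _ _ (((1 + s) / (1 - s) + 3) * (M * (2 / (1 - s))))); auto.
    apply Rmult_le_pos; lra.
    intros N HN. destruct (HK N HN) as [_ H2]. lra.
Qed.

Lemma le_of_le_near_1 (X Y K rho0 : R) : rho0 < 1 ->
  (forall rho, rho0 <= rho < 1 -> X <= Y + K * (1 - rho)) -> X <= Y.
Proof.
  intros H0 H. destruct (Rle_lt_dec X Y) as [|Hlt]; auto. exfalso.
  pose proof (Rabs_pos K).
  set (e := Rmin (1 - rho0) ((X - Y) / (2 * (Rabs K + 1)))).
  assert (He : 0 < e) by (apply Rmin_pos; [lra | apply Rdiv_lt_0_compat; lra]).
  assert (He1 : e <= 1 - rho0) by apply Rmin_l.
  assert (He2 : e * (2 * (Rabs K + 1)) <= X - Y).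
  { apply Rmult_le_reg_r with (/ (2 * (Rabs K + 1))). apply Rinv_0_lt_compat; lra.
    replace (e * (2 * (Rabs K + 1)) * / (2 * (Rabs K + 1))) with e by (field; lra). apply Rmin_r. }
  specialize (H (1 - e) ltac:(lra)). replace (1 - (1 - e)) with e in H by ring.
  pose proof (Rle_abs K). nra.
Qed.

Lemma harnack_lower_gap r rho : 0 <= r < rho -> rho < 1 ->
  (1 - r) / (1 + r) <= (rho - r) / (rho + r) + 2 * (1 - rho).
Proof.
  intros H1 H2.
  replace ((1 - r) / (1 + r))
    with ((rho - r) / (rho + r) + 2 * r * (1 - rho) / ((1 + r) * (rho + r)))
    by (field; lra).
  apply Rplus_le_compat_l.
  apply Rmult_le_reg_r with ((1 + r) * (rho + r)). nra.
  replace (2 * r * (1 - rho) / ((1 + r) * (rho + r)) * ((1 + r) * (rho + r)))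
    with (2 * r * (1 - rho))
    by (field; lra).
  assert (r <= (1 + r) * (rho + r)) by nra.
  replace (2 * r * (1 - rho)) with ((2 * (1 - rho)) * r) by ring.
  apply Rmult_le_compat_l; lra.
Qed.

Lemma harnack_upper_gap r rho : 0 <= r < 1 -> (1 + r) / 2 <= rho -> rho < 1 ->
  (rho + r) / (rho - r) <= (1 + r) / (1 - r) + 4 / (1 - r) ^ 2 * (1 - rho).
Proof.
  intros H1 H2 H3.
  replace ((rho + r) / (rho - r))
    with ((1 + r) / (1 - r) + 2 * r * (1 - rho) / ((rho - r) * (1 - r)))
    by (field; lra).
  apply Rplus_le_compat_l.
  apply Rmult_le_reg_r with ((rho - r) * (1 - r) ^ 2).
  apply Rmult_lt_0_compat; [lra | apply pow_lt; lra].
  replace (2 * r * (1 - rho) / ((rho - r) * (1 - r)) * ((rho - r) * (1 - r) ^ 2))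
    with ((1 - rho) * (2 * r * (1 - r))) by (field; lra).
  replace (4 / (1 - r) ^ 2 * (1 - rho) * ((rho - r) * (1 - r) ^ 2))
    with ((1 - rho) * (4 * (rho - r))) by (field; lra).
  apply Rmult_le_compat_l; nra.
Qed.

Lemma harnack (c : nat -> C) (p : C -> C) :
  series_on_disk c p -> c O = RtoC 1 -> (forall zeta, Cmod zeta < 1 -> 0 < Re (p zeta)) ->
  forall z, Cmod z < 1 ->
  (1 - Cmod z) / (1 + Cmod z) <= Re (p z) /\ Cmod (p z) <= (1 + Cmod z) / (1 - Cmod z).
Proof.
  intros Hs Hc0 Hpos z Hz. pose proof (Cmod_ge_0 z).
  split.
  - apply (le_of_le_near_1 _ _ 2 ((1 + Cmod z) / 2)). lra.
    intros rho Hrho. destruct (harnack_radius c p Hs Hc0 Hpos z rho ltac:(lra) (proj2 Hrho)) as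
      [H1 _].
    pose proof (harnack_lower_gap (Cmod z) rho ltac:(lra) (proj2 Hrho)). lra.
  - apply (le_of_le_near_1 _ _ (4 / (1 - Cmod z) ^ 2) ((1 + Cmod z) / 2)). lra.
    intros rho Hrho. destruct (harnack_radius c p Hs Hc0 Hpos z rho ltac:(lra) (proj2 Hrho)) as
      [_ H2].
    pose proof (harnack_upper_gap (Cmod z) rho ltac:(lra) (proj1 Hrho) (proj2 Hrho)). lra.
Qed.
Lemma le_of_nonneg_derivative (f df : R -> R) (r : R) : 0 <= r ->
  (forall t, 0 <= t <= r -> derivable_pt_lim f t (df t)) ->
  (forall t, 0 <= t <= r -> 0 <= df t) -> f 0 <= f r.
Proof.
  intros Hr Hd Hp. destruct (Req_dec r 0) as [E|E]. subst. lra.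
  destruct (MVT_cor2 f df 0 r ltac:(lra) Hd) as [c0 [Hc1 Hc2]].
  assert (0 <= df c0 * (r - 0)) by (apply Rmult_le_pos; [apply Hp; lra | lra]). lra.
Qed.

(* The comparison functions.  upper_bd alpha = t + sum cf_n t^n and
   lower_bd alpha = t + sum cf_n (-1)^(n-1) t^n have bounded coefficients,
   hence radius of convergence at least 1. *)
Lemma cf_bound alpha n : 0 <= alpha < 1 -> 0 <= cf alpha n <= 2.
Proof.
  intros Ha. destruct n as [|[|n]]; unfold cf; try lra.
  assert (1 <= INR (S (S n))) by (apply (le_INR 1); lia).
  split. apply Rdiv_le_0_compat; lra.
  apply Rmult_le_reg_r with (INR (S (S n))). lra. unfold Rdiv.
  rewrite Rmult_assoc, Rinv_l by lra. nra.
Qed.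

Lemma is_series_delta (v : R) (k : nat) : is_series (fun n => if (n =? k)%nat then v else 0) v.
Proof.
  rewrite Ris_eps. intros eps He. exists k. intros n Hn.
  assert (Z : forall m, (m < k)%nat -> @eq R (sum_n (fun n => if (n =? k)%nat then v else 0) m) 0).
  { induction m; intros Hm.
    - rewrite sum_O. destruct (Nat.eqb_spec 0 k); [lia|auto].
    - rewrite sum_Sn, IHm by lia. destruct (Nat.eqb_spec (S m) k); [lia|]. change (0 + 0 = 0).
    ring. }
  assert (E : forall m, (k <= m)%nat -> @eq R (sum_n (fun n => if (n =? k)%nat then v else 0) m) v).
  { induction m; intros Hm.
    - assert (k = 0%nat) by lia. subst. rewrite sum_O. auto.
    - destruct (Nat.eq_dec k (S m)).
      + subst. rewrite sum_Sn, Z by lia. rewrite Nat.eqb_refl. change (0 + v = v). ring.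
      + rewrite sum_Sn, IHm by lia. destruct (Nat.eqb_spec (S m) k); [lia|]. change (v + 0 = v).
      ring. }
  rewrite E by auto. rewrite Rminus_eq_0, Rabs_R0. lra.
Qed.

Definition lower_coef (alpha : R) (n : nat) : R := cf alpha n * (-1) ^ (n - 1).

Lemma pow_m1_abs k : Rabs ((-1) ^ k) = 1.
Proof. rewrite <- RPow_abs. replace (Rabs (-1)) with 1. apply pow1. rewrite Rabs_left; lra. Qed.

Lemma CV_lower_coef alpha t : 0 <= alpha < 1 -> Rabs t < 1
  -> Rbar_lt (Rabs t) (CV_radius (lower_coef alpha)).
Proof.
  intros Ha Ht. apply CV_radius_ge_1; auto. intros r Hr. exists 2. intros n. unfold lower_coef.
  rewrite !Rabs_mult, pow_m1_abs, Rabs_pos_eq by (apply cf_bound; auto).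
  rewrite Rabs_pos_eq by (apply pow_le; lra).
  pose proof (cf_bound alpha n Ha).
  assert (r ^ n <= 1) by (rewrite <- (pow1 n); apply pow_incr; lra).
  pose proof (pow_le r n (proj1 Hr)). nra.
Qed.

Lemma CV_upper_coef alpha t : 0 <= alpha < 1 -> Rabs t < 1
  -> Rbar_lt (Rabs t) (CV_radius (cf alpha)).
Proof.
  intros Ha Ht. apply CV_radius_ge_1; auto. intros r Hr. exists 2. intros n.
  rewrite !Rabs_mult, Rabs_pos_eq by (apply cf_bound; auto).
  rewrite Rabs_pos_eq by (apply pow_le; lra).
  pose proof (cf_bound alpha n Ha).
  assert (r ^ n <= 1) by (rewrite <- (pow1 n); apply pow_incr; lra).
  pose proof (pow_le r n (proj1 Hr)). nra.
Qed.

Lemma lower_bd_PSeries alpha t : lower_bd alpha t = t + PSeries (lower_coef alpha) t.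
Proof. reflexivity. Qed.
Lemma upper_bd_PSeries alpha t : upper_bd alpha t = t + PSeries (cf alpha) t.
Proof. reflexivity. Qed.

Lemma INR_cf alpha k : INR (S (S k)) * cf alpha (S (S k)) = 2 * (1 - alpha).
Proof. unfold cf. field. apply not_0_INR. lia. Qed.

Lemma PSeries_derive_lower_coef alpha t : 0 <= alpha < 1 -> Rabs t < 1 ->
  PSeries (PS_derive (lower_coef alpha)) t = 2 * (1 - alpha) * (/ (1 + t) - 1).
Proof.
  intros Ha Ht. apply is_series_unique.
  assert (Hg : Rabs (- t) < 1) by (rewrite Rabs_Ropp; auto).
  pose proof (is_series_minus _ _ _ _ (is_series_geom (- t) Hg) (is_series_delta 1 0)) as H.
  apply (is_series_scal_l (K:=R_AbsRing) (V:=R_NormedModule) (2 * (1 - alpha))) in H.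
  replace (2 * (1 - alpha) * (/ (1 + t) - 1))
    with (scal (2 * (1 - alpha)) (plus (/ (1 - - t)) (opp 1))).
  2:{ change (2 * (1 - alpha) * (/ (1 - - t) + - 1) = 2 * (1 - alpha) * (/ (1 + t) - 1)).
      replace (1 - - t) with (1 + t) by ring. ring. }
  eapply is_series_ext; [|exact H]. intros n. unfold PS_derive, lower_coef.
  change (2 * (1 - alpha) * ((- t) ^ n + - (if (n =? 0)%nat then 1 else 0)) =
          INR (S n) * (cf alpha (S n) * (-1) ^ (S n - 1)) * t ^ n).
  destruct n as [|k].
  - simpl. unfold cf. ring.
  - replace (S (S k) - 1)%nat with (S k) by lia. simpl (S k =? 0)%nat.
    rewrite <- Rmult_assoc, INR_cf. replace (- t) with ((-1) * t) by ring.
    rewrite Rpow_mult_distr. ring.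
Qed.

Lemma PSeries_derive_upper_coef alpha t : 0 <= alpha < 1 -> Rabs t < 1 ->
  PSeries (PS_derive (cf alpha)) t = 2 * (1 - alpha) * (/ (1 - t) - 1).
Proof.
  intros Ha Ht. apply is_series_unique.
  pose proof (is_series_minus _ _ _ _ (is_series_geom t Ht) (is_series_delta 1 0)) as H.
  apply (is_series_scal_l (K:=R_AbsRing) (V:=R_NormedModule) (2 * (1 - alpha))) in H.
  replace (2 * (1 - alpha) * (/ (1 - t) - 1))
    with (scal (2 * (1 - alpha)) (plus (/ (1 - t)) (opp 1))) by reflexivity.
  eapply is_series_ext; [|exact H]. intros n. unfold PS_derive.
  change (2 * (1 - alpha) * (t ^ n + - (if (n =? 0)%nat then 1 else 0)) =
          INR (S n) * cf alpha (S n) * t ^ n).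
  destruct n as [|k].
  - simpl. unfold cf. ring.
  - simpl (S k =? 0)%nat. rewrite INR_cf. ring.
Qed.

Lemma lower_bd_derivative alpha t : 0 <= alpha < 1 -> Rabs t < 1 ->
  derivable_pt_lim (lower_bd alpha) t (alpha + (1 - alpha) * (1 - t) / (1 + t)).
Proof.
  intros Ha Ht. apply is_derive_Reals.
  assert (Ht' : 1 + t <> 0) by (apply Rabs_lt_between in Ht; lra).
  replace (alpha + (1 - alpha) * (1 - t) / (1 + t))
    with (plus 1 (PSeries (PS_derive (lower_coef alpha)) t)).
  2:{ rewrite PSeries_derive_lower_coef by auto.
  change (1 + 2 * (1 - alpha) * (/ (1 + t) - 1) = alpha + (1 - alpha) * (1 - t) / (1 + t)).
      field. auto. }
  apply (is_derive_plus (fun t => t) (PSeries (lower_coef alpha))).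
  apply is_derive_Reals, derivable_pt_lim_id.
  apply is_derive_PSeries. apply CV_lower_coef; auto.
Qed.

Lemma upper_bd_derivative alpha t : 0 <= alpha < 1 -> Rabs t < 1 ->
  derivable_pt_lim (upper_bd alpha) t (alpha + (1 - alpha) * (1 + t) / (1 - t)).
Proof.
  intros Ha Ht. apply is_derive_Reals.
  assert (Ht' : 1 - t <> 0) by (apply Rabs_lt_between in Ht; lra).
  replace (alpha + (1 - alpha) * (1 + t) / (1 - t))
    with (plus 1 (PSeries (PS_derive (cf alpha)) t)).
  2:{ rewrite PSeries_derive_upper_coef by auto.
  change (1 + 2 * (1 - alpha) * (/ (1 - t) - 1) = alpha + (1 - alpha) * (1 + t) / (1 - t)).
      field. auto. }
  apply (is_derive_plus (fun t => t) (PSeries (cf alpha))).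
  apply is_derive_Reals, derivable_pt_lim_id.
  apply is_derive_PSeries. apply CV_upper_coef; auto.
Qed.

Lemma lower_0 alpha : lower_bd alpha 0 = 0.
Proof. rewrite lower_bd_PSeries, PSeries_0. unfold lower_coef, cf. ring. Qed.
Lemma upper_0 alpha : upper_bd alpha 0 = 0.
Proof. rewrite upper_bd_PSeries, PSeries_0. unfold cf. ring. Qed.

Lemma lower_nonneg alpha r : 0 <= alpha < 1 -> 0 <= r < 1 -> 0 <= lower_bd alpha r.
Proof.
  intros Ha Hr. rewrite <- (lower_0 alpha).
  apply (le_of_nonneg_derivative _ (fun t => alpha + (1 - alpha) * (1 - t) / (1 + t))).
  lra. intros t Ht. apply lower_bd_derivative; auto. rewrite Rabs_pos_eq; lra.
  intros t Ht. apply Rplus_le_le_0_compat. lra. apply Rdiv_le_0_compat; [apply Rmult_le_pos|]; lra.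
Qed.

Lemma upper_nonneg alpha r : 0 <= alpha < 1 -> 0 <= r < 1 -> 0 <= upper_bd alpha r.
Proof.
  intros Ha Hr. rewrite <- (upper_0 alpha).
  apply (le_of_nonneg_derivative _ (fun t => alpha + (1 - alpha) * (1 + t) / (1 - t))).
  lra. intros t Ht. apply upper_bd_derivative; auto. rewrite Rabs_pos_eq; lra.
  intros t Ht. apply Rplus_le_le_0_compat. lra. apply Rdiv_le_0_compat; [apply Rmult_le_pos|]; lra.
Qed.

Lemma derivable_along_ray (Lf : C -> R) (f : C -> C) (l u : C) (t0 : R) :
  (forall a b, Lf (a + b)%C = Lf a + Lf b) -> (forall (r : R) a, Lf (RtoC r * a)%C = r * Lf a) ->
  (forall a, Rabs (Lf a) <= Cmod a) ->
  Cmod u = 1 -> is_derive f (RtoC t0 * u)%C l ->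
  derivable_pt_lim (fun t => Lf (f (RtoC t * u)%C)) t0 (Lf (l * u)%C).
Proof.
  intros Hadd Hsc Hb Hu Hd eps Heps.
  destruct Hd as [_ Hd]. specialize (Hd (RtoC t0 * u)%C (fun P HP => HP)).
  destruct (Hd (mkposreal (eps / 2) ltac:(lra))) as [del Hdel].
  exists del. intros h Hh0 Hh.
  set (z0 := (RtoC t0 * u)%C). set (y := (RtoC (t0 + h) * u)%C).
  assert (Hyz : (y - z0)%C = (RtoC h * u)%C) by (unfold y, z0; rewrite RtoC_plus; ring).
  assert (Hb2 : Cmod (y - z0) = Rabs h) by (rewrite Hyz, Cmod_mult, Hu, Cmod_R; ring).
  specialize (Hdel y). 
  assert (Hball : Cmod (y - z0)%C < del) by (rewrite Hb2; auto).
  specialize (Hdel Hball). simpl in Hdel.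
  change (Cmod (f y - f z0 - (y - z0) * l)%C <= eps / 2 * Cmod (y - z0)%C) in Hdel.
  rewrite Hb2, Hyz in Hdel.
  assert (Hlin : Lf (f y) - Lf (f z0) - h * Lf (l * u)%C = Lf (f y - f z0 - RtoC h * u * l)%C).
  { assert (Hm : forall a, Lf (- a)%C = - Lf a).
    { intros a. replace (- a)%C with (RtoC (-1) * a)%C
      by (unfold Copp, Cmult, RtoC; apply injective_projections; simpl; ring). rewrite Hsc. ring. }
    unfold Cminus. rewrite !Hadd, !Hm. replace (RtoC h * u * l)%C with (RtoC h * (l * u))%C by ring.
    rewrite Hsc. ring. }
  fold y z0.
  replace ((Lf (f y) - Lf (f z0)) / h - Lf (l * u)%C)
    with ((Lf (f y) - Lf (f z0) - h * Lf (l * u)%C) / h) by (field; auto).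
  rewrite Hlin. unfold Rdiv. rewrite Rabs_mult, Rabs_inv.
  pose proof (Hb (f y - f z0 - RtoC h * u * l)%C).
  assert (0 < Rabs h) by (apply Rabs_pos_lt; auto).
  apply Rle_lt_trans with (eps / 2 * Rabs h * / Rabs h).
  apply Rmult_le_compat_r. left; apply Rinv_0_lt_compat; auto. lra.
  field_simplify; lra.
Qed.

Lemma Re_mul_add (w a b : C) : Re (w * (a + b))%C = Re (w * a)%C + Re (w * b)%C.
Proof. unfold Re, Cmult, Cplus; simpl. ring. Qed.
Lemma Re_mul_scal (w : C) (r : R) a : Re (w * (RtoC r * a))%C = r * Re (w * a)%C.
Proof. unfold Re, Cmult, RtoC; simpl. ring. Qed.
Lemma Re_mul_bound (w a : C) : Cmod w <= 1 -> Rabs (Re (w * a)%C) <= Cmod a.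
Proof.
  intros Hw. eapply Rle_trans. apply re_le_Cmod. rewrite Cmod_mult.
  pose proof (Cmod_ge_0 a). nra.
Qed.
Lemma Re_mul_conj_add (w a b : C) : Re (w * Cconj (a + b))%C
  = Re (w * Cconj a)%C + Re (w * Cconj b)%C.
Proof. unfold Re, Cmult, Cplus, Cconj; simpl. ring. Qed.
Lemma Re_mul_conj_scal (w : C) (r : R) a : Re (w * Cconj (RtoC r * a))%C = r * Re (w * Cconj a)%C.
Proof. unfold Re, Cmult, RtoC, Cconj; simpl. ring. Qed.
Lemma Re_mul_conj_bound (w a : C) : Cmod w <= 1 -> Rabs (Re (w * Cconj a)%C) <= Cmod a.
Proof.
  intros Hw. eapply Rle_trans. apply re_le_Cmod. rewrite Cmod_mult, Cmod_conj.
  pose proof (Cmod_ge_0 a). nra.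
Qed.

Lemma polar_unit (w : C) : exists u, Cmod u = 1 /\ w = (u * RtoC (Cmod w))%C.
Proof.
  destruct (Req_dec (Cmod w) 0) as [E|E].
  - exists (RtoC 1). split. apply Cmod_1. rewrite E. apply Cmod_eq_0 in E. rewrite E. ring.
  - exists (w / RtoC (Cmod w))%C. assert (RtoC (Cmod w) <> RtoC 0) by (intros X; injection X; auto).
    split.
    + rewrite Cmod_div by auto. rewrite Cmod_R, Rabs_pos_eq by apply Cmod_ge_0. field. auto.
    + field. auto.
Qed.

Lemma conj_unit_mul (u : C) : Cmod u = 1 -> (Cconj u * u)%C = RtoC 1.
Proof. intros H. rewrite Cmult_comm, <- Cmod2_conj, H. simpl. f_equal. ring. Qed.

Lemma series_value_at_0 (a : nat -> C) h : series_on_disk a h -> h (RtoC 0) = a O.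
Proof.
  intros Hs. assert (Cmod (RtoC 0) < 1) by (rewrite Cmod_0; lra).
  specialize (Hs _ H). apply is_pseries_C in Hs.
  apply (Cis_unique _ _ _ Hs). replace (a O) with (a O * Cpow (RtoC 0) 0)%C by (simpl; ring).
  eapply Cis_ext; [|apply (Cis_delta0 (fun m => a m * Cpow (RtoC 0) m)%C)].
  intros m. destruct m; simpl; ring.
Qed.

Section GrowthBounds.
Variable alpha : R.
Hypothesis Ha : 0 <= alpha < 1.
Variables (h g : C -> C) (a b : nat -> C).
Hypothesis Has : series_on_disk a h.
Hypothesis Hbs : series_on_disk b g.
Hypothesis Ha0 : a O = RtoC 0.
Hypothesis Ha1 : a 1%nat = RtoC 1.
Hypothesis Hb0 : b O = RtoC 0.
Hypothesis Hb1 : b 1%nat = RtoC 0.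
Hypothesis Hder : forall z : C, Cmod z < 1 ->
     exists dh dg : C, is_derive h z dh /\ is_derive g z dg
       /\ Re (Cminus dh (RtoC alpha)) > Cmod dg.

Definition Dh z := C_derive h z.
Definition Dg z := C_derive g z.

Lemma deriv_props z : Cmod z < 1 -> is_derive h z (Dh z) /\ is_derive g z (Dg z)
  /\ Re (Dh z - alpha) > Cmod (Dg z).
Proof.
  intros Hz. destruct (Hder z Hz) as [dh [dg [H1 [H2 H3]]]]. unfold Dh, Dg.
  rewrite (is_C_derive_unique _ _ _ H1), (is_C_derive_unique _ _ _ H2). auto.
Qed.

Lemma Dh_series z : Cmod z < 1 -> Cis (fun n => INR (S n) * a (S n) * Cpow z n)%C (Dh z).
Proof.
  intros Hz. destruct (ps_deriv a h Has z Hz) as [l [Hl Hd]]. unfold Dh.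
  rewrite (is_C_derive_unique _ _ _ Hd). auto.
Qed.

Lemma Dg_series z : Cmod z < 1 -> Cis (fun n => INR (S n) * b (S n) * Cpow z n)%C (Dg z).
Proof.
  intros Hz. destruct (ps_deriv b g Hbs z Hz) as [l [Hl Hd]]. unfold Dg.
  rewrite (is_C_derive_unique _ _ _ Hd). auto.
Qed.

Lemma one_m_alpha_nz : RtoC (1 - alpha) <> RtoC 0.
Proof. intros E. injection E. lra. Qed.

(* For |eps| <= 1, p_eps = (h' + eps g' - alpha)/(1 - alpha) is a Caratheodory
   function: a power series with constant term 1 and positive real part. *)
Definition p_eps (eps : C) (z : C) : C := ((Dh z + eps * Dg z - RtoC alpha) / RtoC (1 - alpha))%C.
Definition c_eps (eps : C) (n : nat) : C :=
  ((INR (S n) * a (S n) + eps * (INR (S n) * b (S n)) - RtoC alpha *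
    (if (n =? 0)%nat then RtoC 1 else RtoC 0))
   / RtoC (1 - alpha))%C.

Lemma p_eps_series eps : series_on_disk (c_eps eps) (p_eps eps).
Proof.
  intros z Hz. apply is_pseries_C.
  pose proof (Cis_plus _ _ _ _
    (Cis_plus _ _ _ _ (Dh_series z Hz) (Cis_scal eps _ _ (Dg_series z Hz)))
                (Cis_scal (-1) _ _ (Cis_delta0 (fun m => RtoC alpha * Cpow z m)%C))) as H.
  apply (Cis_scal (/ RtoC (1 - alpha))) in H.
  unfold p_eps. replace ((Dh z + eps * Dg z - RtoC alpha) / RtoC (1 - alpha))%C with
    (/ RtoC (1 - alpha) * (Dh z + eps * Dg z + -1 * (RtoC alpha * Cpow z 0)))%C.
  2:{ simpl. field. apply one_m_alpha_nz. }
  eapply Cis_ext; [|exact H]. intros n. unfold c_eps. simpl. field. apply one_m_alpha_nz.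
Qed.

Lemma c_eps_0 eps : c_eps eps O = RtoC 1.
Proof.
  unfold c_eps. simpl. rewrite Ha1, Hb1.
  replace (1 * 1 + eps * (1 * 0) - RtoC alpha * 1)%C with (RtoC (1 - alpha)).
  field. apply one_m_alpha_nz.
  unfold RtoC, Cminus, Cplus, Copp, Cmult; apply injective_projections; simpl; ring.
Qed.

Lemma p_eps_pos eps : Cmod eps <= 1 -> forall z, Cmod z < 1 -> 0 < Re (p_eps eps z).
Proof.
  intros He z Hz. destruct (deriv_props z Hz) as [_ [_ H]]. unfold p_eps.
  rewrite Re_div_real by lra.
  apply Rdiv_lt_0_compat; [|lra].
  pose proof (Re_ge_negCmod (eps * Dg z)%C). rewrite Cmod_mult in H0.
  pose proof (Cmod_ge_0 (Dg z)). pose proof (Cmod_ge_0 eps).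
  assert (Cmod eps * Cmod (Dg z) <= Cmod (Dg z)) by nra.
  change (Re (Dh z) - alpha > Cmod (Dg z)) in H.
  change (0 < Re (Dh z) + Re (eps * Dg z)%C - alpha). lra.
Qed.

(* Harnack for p_eps with eps rotating g' onto -|g'|: the lower bound on
   Re h' - |g'|. *)
Lemma deriv_lower_bound z : Cmod z < 1 -> alpha + (1 - alpha) * (1 - Cmod z) / (1 + Cmod z)
  <= Re (Dh z) - Cmod (Dg z).
Proof.
  intros Hz. destruct (polar_unit (Dg z)) as [v [Hv Ev]].
  set (eps := (- Cconj v)%C).
  assert (He : Cmod eps <= 1) by (unfold eps; rewrite Cmod_opp, Cmod_conj; lra).
  destruct (harnack (c_eps eps) (p_eps eps) (p_eps_series eps) (c_eps_0 eps) (p_eps_pos eps He) z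
    Hz) as [H1 _].
  assert (E : p_eps eps z = ((Dh z - RtoC (Cmod (Dg z)) - RtoC alpha) / RtoC (1 - alpha))%C).
  { unfold p_eps, eps. f_equal. rewrite Ev at 1.
    replace (Dh z + - Cconj v * (v * RtoC (Cmod (Dg z))) - RtoC alpha)%C with
      (Dh z - (Cconj v * v) * RtoC (Cmod (Dg z)) - RtoC alpha)%C by ring.
    rewrite (conj_unit_mul v Hv). ring. }
  rewrite E, Re_div_real in H1 by lra.
  change (Re (Dh z - RtoC (Cmod (Dg z)) - RtoC alpha)%C)
    with (Re (Dh z) - Cmod (Dg z) - alpha) in H1.
  pose proof (Cmod_ge_0 z).
  assert ((1 - alpha) * ((1 - Cmod z) / (1 + Cmod z)) <= Re (Dh z) - Cmod (Dg z) - alpha).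
  { apply Rmult_le_reg_r with (/ (1 - alpha)). apply Rinv_0_lt_compat; lra.
    replace ((1 - alpha) * ((1 - Cmod z) / (1 + Cmod z)) * / (1 - alpha))
      with ((1 - Cmod z) / (1 + Cmod z)) by (field; lra).
    auto. }
  unfold Rdiv in *. lra.
Qed.

(* Harnack for p_eps with eps aligning g' with h': the bound on |h'| + |g'|. *)
Lemma deriv_upper_bound z : Cmod z < 1 -> Cmod (Dh z) + Cmod (Dg z)
  <= alpha + (1 - alpha) * (1 + Cmod z) / (1 - Cmod z).
Proof.
  intros Hz. destruct (polar_unit (Dg z)) as [v [Hv Ev]].
  destruct (polar_unit (Dh z)) as [u [Hu Eu]].
  set (eps := (u * Cconj v)%C).
  assert (He : Cmod eps <= 1) by (unfold eps; rewrite Cmod_mult, Cmod_conj, Hu, Hv; lra).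
  destruct (harnack (c_eps eps) (p_eps eps) (p_eps_series eps) (c_eps_0 eps) (p_eps_pos eps He) z
    Hz) as [_ H2].
  assert (E : (Dh z + eps * Dg z)%C = (u * RtoC (Cmod (Dh z) + Cmod (Dg z)))%C).
  { unfold eps. set (A := Cmod (Dh z)) in *. set (B := Cmod (Dg z)) in *. rewrite Eu, Ev.
  rewrite RtoC_plus.
    replace (u * RtoC A + u * Cconj v * (v * RtoC B))%C
      with (u * RtoC A + u * (Cconj v * v) * RtoC B)%C by ring.
    rewrite (conj_unit_mul v Hv). ring. }
  assert (E2 : (Dh z + eps * Dg z)%C = (RtoC (1 - alpha) * p_eps eps z + RtoC alpha)%C).
  { unfold p_eps. field. apply one_m_alpha_nz. }
  assert (Cmod (Dh z) + Cmod (Dg z) = Cmod (Dh z + eps * Dg z)).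
  { rewrite E, Cmod_mult, Hu, Cmod_R, Rabs_pos_eq. ring. pose proof (Cmod_ge_0 (Dh z)).
  pose proof (Cmod_ge_0 (Dg z)). lra. }
  rewrite H, E2. eapply Rle_trans. apply Cmod_triangle.
  rewrite Cmod_mult, !Cmod_R, !Rabs_pos_eq by lra.
  pose proof (Cmod_ge_0 z). 
  assert ((1 - alpha) * Cmod (p_eps eps z) <= (1 - alpha) * ((1 + Cmod z) / (1 - Cmod z)))
    by (apply Rmult_le_compat_l; lra).
  unfold Rdiv in *. lra.
Qed.

(* The projection t |-> Re (w f(t u)) of f along the ray through u, and its
   derivative (w f rotates f(z) onto the positive axis when w = conj of its phase). *)
Definition ray_proj (w u : C) (t : R) : R := Re (w * h (RtoC t * u))%C + Re
  (w * Cconj (g (RtoC t * u)))%C.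
Definition ray_proj_deriv (w u : C) (t : R) : R :=
  Re (w * (Dh (RtoC t * u) * u))%C + Re (w * Cconj (Dg (RtoC t * u) * u))%C.

Lemma Cmod_ray (u : C) (t : R) : Cmod u = 1 -> 0 <= t -> Cmod (RtoC t * u)%C = t.
Proof. intros Hu Ht. rewrite Cmod_mult, Hu, Cmod_R, Rabs_pos_eq; lra. Qed.

Lemma ray_proj_derivative (w u : C) (t : R) : Cmod w <= 1 -> Cmod u = 1
  -> Cmod (RtoC t * u)%C < 1 ->
  derivable_pt_lim (ray_proj w u) t (ray_proj_deriv w u t).
Proof.
  intros Hw Hu Ht. destruct (deriv_props _ Ht) as [H1 [H2 _]].
  apply (derivable_pt_lim_plus (fun t => Re (w * h (RtoC t * u))%C)
    (fun t => Re (w * Cconj (g (RtoC t * u)))%C)).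
  - apply (derivable_along_ray (fun X => Re (w * X)%C)); auto. apply Re_mul_add.
  apply Re_mul_scal. intros; apply Re_mul_bound; auto.
  - apply (derivable_along_ray (fun X => Re (w * Cconj X)%C)); auto. apply Re_mul_conj_add.
  apply Re_mul_conj_scal. intros; apply Re_mul_conj_bound; auto.
Qed.

Lemma ray_proj_0 (w u : C) : ray_proj w u 0 = 0.
Proof.
  unfold ray_proj. replace (RtoC 0 * u)%C with (RtoC 0) by ring.
  rewrite (series_value_at_0 a h Has), (series_value_at_0 b g Hbs), Ha0, Hb0. rewrite Cconj_RtoC.
  unfold Re, Cmult, RtoC; simpl. ring.
Qed.

(* Lower bound: along the ray from 0 to z, Re(conj(u) f(t u)) grows at least
   like lower_bd, since its derivative is >= Re h' - |g'|. *)
Lemma radial_lower z : Cmod z < 1 -> lower_bd alpha (Cmod z) <= Cmod (h z + Cconj (g z))%C.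
Proof.
  intros Hz. pose proof (Cmod_ge_0 z). set (r := Cmod z) in *.
  destruct (polar_unit z) as [u [Hu Ez]]. fold r in Ez.
  set (w := Cconj u). assert (Hw : Cmod w = 1) by (unfold w; rewrite Cmod_conj; auto).
  assert (Hwu : (w * u)%C = RtoC 1) by (apply conj_unit_mul; auto).
  assert (Hmono : (fun t => ray_proj w u t - lower_bd alpha t) 0
    <= (fun t => ray_proj w u t - lower_bd alpha t) r).
  { apply (le_of_nonneg_derivative (fun t => ray_proj w u t - lower_bd alpha t)
    (fun t => ray_proj_deriv w u t - (alpha + (1 - alpha) * (1 - t) / (1 + t)))); auto.
    - intros t Ht. assert (Htu : Cmod (RtoC t * u)%C < 1) by (rewrite Cmod_ray; lra).
      apply (derivable_pt_lim_minus (ray_proj w u) (lower_bd alpha)).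
      apply ray_proj_derivative; auto; lra. apply lower_bd_derivative; auto.
      rewrite Rabs_pos_eq; lra.
    - intros t Ht. assert (Htu : Cmod (RtoC t * u)%C < 1) by (rewrite Cmod_ray; lra).
      pose proof (deriv_lower_bound _ Htu) as HL. rewrite Cmod_ray in HL by (auto; lra).
      unfold ray_proj_deriv. set (D1 := Dh (RtoC t * u)%C) in *. set (D2 := Dg (RtoC t * u)%C) in *.
      replace (w * (D1 * u))%C with (D1 * (w * u))%C by ring. rewrite Hwu, Cmult_1_r.
      pose proof (Re_ge_negCmod (w * Cconj (D2 * u))%C).
      rewrite Cmod_mult, Cmod_conj, Cmod_mult, Hw, Hu in H0.
      lra. }
  simpl in Hmono. rewrite ray_proj_0, lower_0 in Hmono.
  unfold ray_proj in Hmono. replace (RtoC r * u)%C with z in Hmono by (rewrite Ez; ring).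
  rewrite <- Re_mul_add in Hmono. pose proof (Re_le_Cmod (w * (h z + Cconj (g z)))%C).
  rewrite Cmod_mult, Hw in H0. lra.
Qed.

(* Upper bound: Re(w f(t u)) grows at most like upper_bd, since its
   derivative is <= |h'| + |g'|; taking w the conjugate phase of f(z) gives |f(z)|. *)
Lemma radial_upper z : Cmod z < 1 -> Cmod (h z + Cconj (g z))%C <= upper_bd alpha (Cmod z).
Proof.
  intros Hz. pose proof (Cmod_ge_0 z). set (r := Cmod z) in *.
  destruct (polar_unit z) as [u [Hu Ez]]. fold r in Ez.
  destruct (polar_unit (h z + Cconj (g z))%C) as [v [Hv Ev]].
  set (w := Cconj v). assert (Hw : Cmod w = 1) by (unfold w; rewrite Cmod_conj; auto).
  assert (Hwv : (w * v)%C = RtoC 1) by (apply conj_unit_mul; auto).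
  assert (Hmono : (fun t => upper_bd alpha t - ray_proj w u t) 0
    <= (fun t => upper_bd alpha t - ray_proj w u t) r).
  { apply (le_of_nonneg_derivative (fun t => upper_bd alpha t - ray_proj w u t)
    (fun t => (alpha + (1 - alpha) * (1 + t) / (1 - t)) - ray_proj_deriv w u t)); auto.
    - intros t Ht. assert (Htu : Cmod (RtoC t * u)%C < 1) by (rewrite Cmod_ray; lra).
      apply (derivable_pt_lim_minus (upper_bd alpha) (ray_proj w u)).
      apply upper_bd_derivative; auto. rewrite Rabs_pos_eq; lra.
      apply ray_proj_derivative; auto; lra.
    - intros t Ht. assert (Htu : Cmod (RtoC t * u)%C < 1) by (rewrite Cmod_ray; lra).
      pose proof (deriv_upper_bound _ Htu) as HU. rewrite Cmod_ray in HU by (auto; lra).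
      unfold ray_proj_deriv. set (D1 := Dh (RtoC t * u)%C) in *. set (D2 := Dg (RtoC t * u)%C) in *.
      pose proof (Re_le_Cmod (w * (D1 * u))%C). pose proof (Re_le_Cmod (w * Cconj (D2 * u))%C).
      rewrite !Cmod_mult, Hw, Hu in H0. rewrite !Cmod_mult, Cmod_conj, Cmod_mult, Hw, Hu in H1.
      lra. }
  simpl in Hmono. rewrite ray_proj_0, upper_0 in Hmono.
  unfold ray_proj in Hmono. replace (RtoC r * u)%C with z in Hmono by (rewrite Ez; ring).
  rewrite <- Re_mul_add in Hmono. rewrite Ev in Hmono at 1.
  replace (w * (v * RtoC (Cmod (h z + Cconj (g z)))))%C
    with ((w * v) * RtoC (Cmod (h z + Cconj (g z))))%C in Hmono by ring.
  rewrite Hwv, Cmult_1_l in Hmono. simpl in Hmono. lra.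
Qed.

End GrowthBounds.

(* The extremal function f_alpha = z + sum_{n>=2} 2(1-alpha)/n z^n has real
   coefficients in [0, 1], so its series converges on the disk. *)
Definition falpha_real (alpha : R) (n : nat) : R :=
  match n with O => 0 | S O => 1 | _ => cf alpha n end.

Lemma falpha_coef_real alpha n : falpha_coef alpha n = RtoC (falpha_real alpha n).
Proof. destruct n as [|[|n]]; reflexivity. Qed.

Lemma falpha_real_bound alpha n : 0 <= alpha < 1 -> 0 <= falpha_real alpha n <= 1.
Proof.
  intros Ha. destruct n as [|[|n]]; unfold falpha_real; try lra. unfold cf.
  assert (2 <= INR (S (S n))) by (apply (le_INR 2); lia).
  split. apply Rdiv_le_0_compat; lra.
  apply Rmult_le_reg_r with (INR (S (S n))). lra. unfold Rdiv.
  rewrite Rmult_assoc, Rinv_l by lra. nra.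
Qed.

(* The series of f_alpha converges on the disk (stated pointwise, so that a
   function F can be chosen by description). *)
Lemma falpha_series_ex alpha : 0 <= alpha < 1 -> forall z, exists l, Cmod z < 1
  -> is_pseries (falpha_coef alpha) z l.
Proof.
  intros Ha z. destruct (Rlt_dec (Cmod z) 1) as [Hz|Hz].
  - assert (Hex : ex_series (K:=C_AbsRing) (V:=C_CompleteNormedModule)
    (fun n => falpha_coef alpha n * Cpow z n)%C).
    { apply (ex_series_le (K:=C_AbsRing) (V:=C_CompleteNormedModule))
      with (b := fun n => Cmod z ^ n).
      - intros n. change (Cmod (falpha_coef alpha n * Cpow z n)%C <= Cmod z ^ n).
        rewrite Cmod_mult, Cmod_pow, falpha_coef_real, Cmod_R, Rabs_pos_eq
          by (apply falpha_real_bound; auto).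
        pose proof (falpha_real_bound alpha n Ha). pose proof (pow_le (Cmod z) n (Cmod_ge_0 z)).
        nra.
      - exists (/ (1 - Cmod z)). apply is_series_geom. rewrite Rabs_pos_eq; auto. apply Cmod_ge_0. }
    destruct Hex as [l Hl]. exists l. intros _. apply is_pseries_C. exact Hl.
  - exists (RtoC 0). intros H. lra.
Qed.

Lemma falpha_exists alpha : 0 <= alpha < 1 -> exists F : C
  -> C, series_on_disk (falpha_coef alpha) F.
Proof.
  intros Ha. exists (fun z => proj1_sig
    (constructive_indefinite_description _ (falpha_series_ex alpha Ha z))).
  intros z Hz. destruct (constructive_indefinite_description _ (falpha_series_ex alpha Ha z)) as
    [l Hl]. simpl. auto.
Qed.

Lemma falpha_derivative alpha F : series_on_disk (falpha_coef alpha) F -> forall z, Cmod z < 1 ->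
  exists l, is_derive F z l /\ (l - RtoC alpha)%C = (RtoC (1 - alpha) * ((1 + z) / (1 - z)))%C.
Proof.
  intros HF z Hz. destruct (ps_deriv _ F HF z Hz) as [l [Hl Hd]]. exists l. split; auto.
  assert (Hnz : (1 - z)%C <> RtoC 0).
  { apply C_neq0_of_Cmod. eapply Rlt_le_trans; [|apply Cmod_1_minus]. lra. }
  assert (HG := Cis_plus _ _ _ _ (Cis_scal (RtoC (2 * (1 - alpha))) _ _ (Cgeom z Hz))
                 (Cis_scal (RtoC (1 - 2 * (1 - alpha))) _ _ (Cis_delta0 (fun m => Cpow z m)))).
  assert (El : l = (RtoC (2 * (1 - alpha)) * / (1 - z) + RtoC (1 - 2 * (1 - alpha)) * Cpow z 0)%C).
  { apply (Cis_unique _ _ _ Hl). eapply Cis_ext; [|exact HG]. intros n.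
    match goal with |- ?a = ?b => change (@eq C a b) end. destruct n as [|k].
    - simpl. unfold falpha_coef. apply injective_projections; simpl; ring.
    - simpl (S k =? 0)%nat. rewrite falpha_coef_real. unfold falpha_real.
      replace (RtoC (INR (S (S k))) * RtoC (cf alpha (S (S k))))%C with (RtoC (2 * (1 - alpha))).
      ring. rewrite <- RtoC_mult, INR_cf. auto. }
  rewrite El. simpl.
  replace (RtoC (2 * (1 - alpha))) with (2 * (1 - RtoC alpha))%C
    by (apply injective_projections; simpl; ring).
  replace (RtoC (1 - 2 * (1 - alpha))) with (1 - 2 * (1 - RtoC alpha))%C
    by (apply injective_projections; simpl; ring).
  replace (RtoC (1 - alpha)) with (1 - RtoC alpha)%C
    by (apply injective_projections; simpl; ring).
  field. auto.
Qed.

(* f_alpha = f_alpha + conj 0 belongs to P^0_H(alpha): Re (f_alpha' - alpha)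
   = (1 - alpha) Re((1 + z)/(1 - z)) > 0. *)
Lemma falpha_PH0 alpha : 0 <= alpha < 1 -> forall F, series_on_disk (falpha_coef alpha) F ->
  in_PH0 alpha F (fun _ => RtoC 0).
Proof.
  intros Ha F HF. split.
  - exists (falpha_coef alpha), (fun _ => RtoC 0). split; auto. split.
    + intros z Hz. apply is_pseries_C. eapply Cis_ext; [|apply Cis_zero]. intros; simpl. ring.
    + repeat split; reflexivity.
  - intros z Hz. destruct (falpha_derivative alpha F HF z Hz) as [l [Hd E]]. exists l, (RtoC 0).
    split; auto. split. apply (is_derive_const (K:=C_AbsRing) (V:=C_NormedModule)).
    rewrite Cmod_0, E, re_scal_l. destruct (cayley_bounds z (Cmod z) eq_refl Hz) as [H1 _].
    pose proof (Cmod_ge_0 z).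
    assert (0 < (1 - Cmod z) / (1 + Cmod z)) by (apply Rdiv_lt_0_compat; lra).
    apply Rlt_gt. apply Rmult_lt_0_compat; lra.
Qed.

Lemma falpha_value_real alpha F x : series_on_disk (falpha_coef alpha) F -> Rabs x < 1 ->
  forall V, is_series (fun n => falpha_real alpha n * x ^ n) V -> F (RtoC x) = RtoC V.
Proof.
  intros HF Hx V HV. assert (Cmod (RtoC x) < 1) by (rewrite Cmod_R; auto).
  specialize (HF _ H). apply is_pseries_C in HF. apply (Cis_unique _ _ _ HF).
  eapply Cis_ext; [|apply Ris_to_Cis, HV]. intros n.
  rewrite falpha_coef_real, RtoC_mult, RtoC_pow. auto.
Qed.

Lemma falpha_at_r alpha : 0 <= alpha < 1 -> forall F, series_on_disk (falpha_coef alpha) F ->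
  forall r, 0 <= r < 1 -> Cmod (F (RtoC r)) = upper_bd alpha r.
Proof.
  intros Ha F HF r Hr. assert (Hr' : Rabs r < 1) by (rewrite Rabs_pos_eq; lra).
  assert (HU : is_series (fun n => cf alpha n * r ^ n) (PSeries (cf alpha) r)).
  { apply is_pseries_R. apply PSeries_correct. apply CV_radius_inside. apply CV_upper_coef; auto. }
  pose proof (is_series_plus _ _ _ _ HU (is_series_delta r 1)) as HS.
  rewrite (falpha_value_real alpha F r HF Hr' (PSeries (cf alpha) r + r)).
  - rewrite Cmod_R, Rabs_pos_eq. rewrite upper_bd_PSeries. ring.
    rewrite Rplus_comm, <- upper_bd_PSeries. apply upper_nonneg; auto.
  - eapply is_series_ext; [|exact HS]. intros n.
    change (cf alpha n * r ^ n + (if (n =? 1)%nat then r else 0) = falpha_real alpha n * r ^ n).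
    destruct n as [|[|n]]; simpl; unfold cf; ring.
Qed.

Lemma falpha_at_minus_r alpha : 0 <= alpha < 1 -> forall F, series_on_disk (falpha_coef alpha) F ->
  forall r, 0 <= r < 1 -> Cmod (F (RtoC (- r))) = lower_bd alpha r.
Proof.
  intros Ha F HF r Hr. assert (Hr' : Rabs r < 1) by (rewrite Rabs_pos_eq; lra).
  assert (Hr'' : Rabs (- r) < 1) by (rewrite Rabs_Ropp; auto).
  assert (HL : is_series (fun n => lower_coef alpha n * r ^ n) (PSeries (lower_coef alpha) r)).
  { apply is_pseries_R. apply PSeries_correct. apply CV_radius_inside. apply CV_lower_coef; auto. }
  apply (is_series_scal_l (K:=R_AbsRing) (V:=R_NormedModule) (-1)) in HL.
  pose proof (is_series_plus _ _ _ _ HL (is_series_delta (- r) 1)) as HS.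
  rewrite (falpha_value_real alpha F (- r) HF Hr''
    (scal (-1) (PSeries (lower_coef alpha) r) + - r)).
  - change (scal (-1) (PSeries (lower_coef alpha) r)) with ((-1) * PSeries (lower_coef alpha) r).
    rewrite Cmod_R. rewrite Rabs_left1. rewrite lower_bd_PSeries. ring.
    assert (0 <= lower_bd alpha r) by (apply lower_nonneg; auto). rewrite lower_bd_PSeries in H.
    lra.
  - eapply is_series_ext; [|exact HS]. intros n.
    change ((-1) * (lower_coef alpha n * r ^ n) + (if (n =? 1)%nat then - r else 0)
            = falpha_real alpha n * (- r) ^ n).
    unfold lower_coef. destruct n as [|[|n]]; simpl; unfold cf; try ring.
    replace (S (S n) - 1)%nat with (S n) by lia.
    replace (- r) with ((-1) * r) by ring. rewrite Rpow_mult_distr. simpl. ring.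
Qed.

Lemma PH0_growth alpha : 0 <= alpha < 1 -> forall h g, in_PH0 alpha h g ->
  forall z, Cmod z < 1 ->
  lower_bd alpha (Cmod z) <= Cmod (h z + Cconj (g z))%C /\
  Cmod (h z + Cconj (g z))%C <= upper_bd alpha (Cmod z).
Proof.
  intros Ha h g [[a [b [Has [Hbs [Ha0 [Ha1 [Hb0 Hb1]]]]]]] Hder] z Hz. split.
  - exact (radial_lower alpha Ha h g a b Has Hbs Ha0 Ha1 Hb0 Hb1 Hder z Hz).
  - exact (radial_upper alpha Ha h g a b Has Hbs Ha0 Ha1 Hb0 Hb1 Hder z Hz).
Qed.

Theorem theorem2p1 (alpha : R) (Halpha : 0 <= alpha < 1) :
  (forall h g : C -> C, in_PH0 alpha h g ->
     forall z : C, Cmod z < 1 ->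
       lower_bd alpha (Cmod z) <= Cmod (Cplus (h z) (Cconj (g z)))
       /\ Cmod (Cplus (h z) (Cconj (g z))) <= upper_bd alpha (Cmod z)) /\
  (exists F : C -> C, series_on_disk (falpha_coef alpha) F) /\
  (forall F : C -> C, series_on_disk (falpha_coef alpha) F ->
     in_PH0 alpha F (fun _ => RtoC 0) /\
     forall r : R, 0 <= r < 1 ->
       Cmod (F (RtoC r)) = upper_bd alpha r /\
       Cmod (F (RtoC (- r))) = lower_bd alpha r).
Proof.
  split; [|split].
  - exact (PH0_growth alpha Halpha).
  - exact (falpha_exists alpha Halpha).
  - intros F HF. split.
    + exact (falpha_PH0 alpha Halpha F HF).
    + intros r Hr. split.
      * exact (falpha_at_r alpha Halpha F HF r Hr).
      * exact (falpha_at_minus_r alpha Halpha F HF r Hr).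
Qed.
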